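(* Let $\Gamma$ be a unitarisable group, i.e. every uniformly bounded representation of $\Gamma$ on a Hilbert space is similar (conjugate by a bounded invertible operator) to a unitary representation. Then every unitary representation of $\Gamma$ is strongly rigid.
   Context: For unitary representations $\pi,\omega:\Gamma\to U(\mathcal H)$ put $\|\pi-\omega\|=\sup_\gamma\|\pi(\gamma)-\omega(\gamma)\|$ (operator norm). $\pi$ is rigid if there is $\varepsilon>0$ such that every $\omega\in\mathrm{Hom}(\Gamma,U(\mathcal H))$ with $\|\pi-\omega\|\le\varepsilon$ is unitarily equivalent to $\pi$. $\pi$ is strongly rigid if it is rigid and the orbit map $U(\mathcal H)/Z(\pi)\to\mathrm{Hom}(\Gamma,U(\mathcal H))$, $U\mapsto U\pi U^{-1}$, is a homeomorphism onto its image, where $Z(\pi)=\{u\in U(\mathcal H):u\pi(\gamma)u^{-1}=\pi(\gamma)\ \forall\gamma\}$, $U(\mathcal H)$ carries the norm topology and $\mathrm{Hom}(\Gamma,U(\mathcal H))$ the topology of the uniform distance above. *)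

From Stdlib Require Import Reals.
Open Scope R_scope.

Record Cx := mkCx { cre : R; cim : R }.
Definition Cadd (a b : Cx) := mkCx (cre a + cre b) (cim a + cim b).
Definition Cmul (a b : Cx) :=
  mkCx (cre a * cre b - cim a * cim b) (cre a * cim b + cim a * cre b).
Definition Cconj (a : Cx) := mkCx (cre a) (- cim a).
Definition C0 := mkCx 0 0.
Definition C1 := mkCx 1 0.

(* inner product linear in the first variable, conjugate-linear in the second *)
Record HilbertSpace := {
  hs :> Type;
  hadd : hs -> hs -> hs;
  hzero : hs;
  hopp : hs -> hs;
  hscal : Cx -> hs -> hs;
  hinner : hs -> hs -> Cx;
  hadd_assoc : forall x y z, hadd x (hadd y z) = hadd (hadd x y) z;
  hadd_comm : forall x y, hadd x y = hadd y x;
  hadd_0 : forall x, hadd x hzero = x;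
  hadd_opp : forall x, hadd x (hopp x) = hzero;
  hscal_1 : forall x, hscal C1 x = x;
  hscal_assoc : forall a b x, hscal a (hscal b x) = hscal (Cmul a b) x;
  hscal_addv : forall a x y, hscal a (hadd x y) = hadd (hscal a x) (hscal a y);
  hscal_adds : forall a b x, hscal (Cadd a b) x = hadd (hscal a x) (hscal b x);
  hinner_addl : forall x y z, hinner (hadd x y) z = Cadd (hinner x z) (hinner y z);
  hinner_scall : forall a x y, hinner (hscal a x) y = Cmul a (hinner x y);
  hinner_conj : forall x y, hinner y x = Cconj (hinner x y);
  hinner_pos : forall x, 0 <= cre (hinner x x);
  hinner_def : forall x, hinner x x = C0 -> x = hzero;
  hcomplete : forall u : nat -> hs,
    (forall eps, eps > 0 -> exists N, forall m n, (N <= m)%nat -> (N <= n)%nat ->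
        sqrt (cre (hinner (hadd (u m) (hopp (u n))) (hadd (u m) (hopp (u n))))) < eps) ->
    exists l, forall eps, eps > 0 -> exists N, forall n, (N <= n)%nat ->
        sqrt (cre (hinner (hadd (u n) (hopp l)) (hadd (u n) (hopp l)))) < eps
}.

Arguments hadd {_}. Arguments hzero {_}. Arguments hopp {_}.
Arguments hscal {_}. Arguments hinner {_}.

Definition hsub {H : HilbertSpace} (x y : H) : H := hadd x (hopp y).
Definition hnorm {H : HilbertSpace} (x : H) : R := sqrt (cre (hinner x x)).

Definition is_linear {H : HilbertSpace} (T : H -> H) : Prop :=
  (forall x y, T (hadd x y) = hadd (T x) (T y)) /\
  (forall a x, T (hscal a x) = hscal a (T x)).

Definition is_bounded {H : HilbertSpace} (T : H -> H) : Prop :=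
  is_linear T /\ exists M, forall x, hnorm (T x) <= M * hnorm x.

Definition opdist_le {H : HilbertSpace} (A B : H -> H) (eps : R) : Prop :=
  forall x, hnorm (hsub (A x) (B x)) <= eps * hnorm x.

Definition is_unitary {H : HilbertSpace} (U : H -> H) : Prop :=
  is_linear U /\ (forall x y, hinner (U x) (U y) = hinner x y) /\
  (forall y, exists x, U x = y).

Record Group := {
  gcar :> Type;
  gmul : gcar -> gcar -> gcar;
  gone : gcar;
  ginv : gcar -> gcar;
  gmul_assoc : forall a b c, gmul a (gmul b c) = gmul (gmul a b) c;
  gmul_1l : forall a, gmul gone a = a;
  gmul_invl : forall a, gmul (ginv a) a = gone
}.
Arguments gmul {_}. Arguments gone {_}. Arguments ginv {_}.

Definition is_hom {G : Group} {H : HilbertSpace} (rho : G -> H -> H) : Prop :=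
  (forall g h x, rho (gmul g h) x = rho g (rho h x)) /\ (forall x, rho gone x = x).

Definition unitary_rep {G : Group} {H : HilbertSpace} (rho : G -> H -> H) : Prop :=
  is_hom rho /\ forall g, is_unitary (rho g).

(* uniformly bounded representation: homomorphism into bounded invertible
   operators with sup_g ||rho g|| < infinity (invertibility follows from is_hom) *)
Definition unif_bounded_rep {G : Group} {H : HilbertSpace} (rho : G -> H -> H) : Prop :=
  is_hom rho /\ (forall g, is_linear (rho g)) /\
  exists M, forall g x, hnorm (rho g x) <= M * hnorm x.

Definition similar_to_unitary {G : Group} {H : HilbertSpace} (rho : G -> H -> H) : Prop :=
  exists S Sinv : H -> H,
    is_bounded S /\ is_bounded Sinv /\
    (forall x, S (Sinv x) = x) /\ (forall x, Sinv (S x) = x) /\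
    forall g, is_unitary (fun x => Sinv (rho g (S x))).

Definition unitarisable (G : Group) : Prop :=
  forall (H : HilbertSpace) (rho : G -> H -> H),
    unif_bounded_rep rho -> similar_to_unitary rho.

Definition unitarily_equivalent {G : Group} {H : HilbertSpace} (pi om : G -> H -> H) : Prop :=
  exists U : H -> H, is_unitary U /\ forall g x, om g (U x) = U (pi g x).

Definition repdist_le {G : Group} {H : HilbertSpace} (pi om : G -> H -> H) (eps : R) : Prop :=
  forall g, opdist_le (pi g) (om g) eps.

Definition rigid {G : Group} {H : HilbertSpace} (pi : G -> H -> H) : Prop :=
  exists eps, eps > 0 /\
    forall om : G -> H -> H, unitary_rep om -> repdist_le pi om eps ->
      unitarily_equivalent pi om.

Definition unitary_pair {H : HilbertSpace} (U U' : H -> H) : Prop :=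
  is_unitary U /\ (forall x, U (U' x) = x) /\ (forall x, U' (U x) = x).

Definition conj_rep {G : Group} {H : HilbertSpace} (U U' : H -> H) (pi : G -> H -> H)
  : G -> H -> H := fun g x => U (pi g (U' x)).

(* The induced map U(H)/Z(pi) -> Hom(Gamma,U(H)) is injective by definition of
   Z(pi).  It is a homeomorphism onto its image iff
   (1) the orbit map U(H) -> Hom is continuous (norm topologies), and
   (2) it is open onto its image for the quotient topology: for every unitary U
       and every norm-neighbourhood {W : ||W - U|| <= eps} of U, there is delta > 0
       such that every orbit point V pi V^-1 within delta of U pi U^-1 is of the
       form W pi W^-1 with ||W - U|| <= eps  (i.e. V is in that ball times Z(pi)). *)
Definition orbit_map_homeo {G : Group} {H : HilbertSpace} (pi : G -> H -> H) : Prop :=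
  (forall U U', unitary_pair U U' ->
     forall eps, eps > 0 -> exists delta, delta > 0 /\
       forall V V', unitary_pair V V' -> opdist_le V U delta ->
         repdist_le (conj_rep V V' pi) (conj_rep U U' pi) eps) /\
  (forall U U', unitary_pair U U' ->
     forall eps, eps > 0 -> exists delta, delta > 0 /\
       forall V V', unitary_pair V V' ->
         repdist_le (conj_rep V V' pi) (conj_rep U U' pi) delta ->
         exists W W', unitary_pair W W' /\ opdist_le W U eps /\
           forall g x, conj_rep W W' pi g x = conj_rep V V' pi g x).

Definition strongly_rigid {G : Group} {H : HilbertSpace} (pi : G -> H -> H) : Prop :=
  rigid pi /\ orbit_map_homeo pi.

(* If a unitary representation [om] is close to [pi], then for a scale [c] the block matrix
   [[pi, c (pi - om)], [0, om]] is a representation on [H (+) H] whose norm stays bounded as long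
   as [c |pi - om| <= 1].  Arguing by contradiction, take bad [om_n] at distance [1/(n+1)^2] and
   put the blocks with [c_n = n + 1] into one uniformly bounded representation on [l^2(N, H)].
   Unitarisability gives a single similarity [S]; projecting along the invariant complement it
   singles out shows that each cocycle [c_n (pi - om_n)] is inner with a witness of norm at most
   [|S| |S^-1|].  Hence [pi - om = pi T - T om] with [|T| = O(1 / c)], i.e. [A = 1 - T] intertwines
   [om] with [pi], and its unitary part [A (A^* A)^(-1/2)], computed by a fixed-point iteration in
   the commutant of [om], is a unitary intertwiner close to the identity.  This gives rigidity, and
   applied to [U^-1 V pi V^-1 U] it gives openness of the orbit map; continuity is elementary. *)

From Pilot Require Import Defs.
From Coquelicot Require Import Hierarchy Series Lim_seq Rbar.
From Stdlib Require Import Reals Lra Psatz ZArith.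
From Stdlib Require Import ClassicalEpsilon FunctionalExtensionality ProofIrrelevance Classical.
Open Scope R_scope.

(** * Complex Hilbert spaces *)

Arguments hadd_assoc {_}. Arguments hadd_comm {_}. Arguments hadd_0 {_}. Arguments hadd_opp {_}.
Arguments hscal_1 {_}. Arguments hscal_assoc {_}. Arguments hscal_addv {_}. Arguments hscal_adds {_}.
Arguments hinner_addl {_}. Arguments hinner_scall {_}. Arguments hinner_conj {_}. Arguments hinner_pos {_}.
Arguments hinner_def {_}. Arguments hcomplete {_}.
Arguments gmul_assoc {_}. Arguments gmul_1l {_}. Arguments gmul_invl {_}.

Lemma Cx_eq (a b : Cx) : cre a = cre b -> cim a = cim b -> a = b.
Proof. destruct a, b; simpl; intros; subst; reflexivity. Qed.

Ltac cx_ring := apply Cx_eq; simpl; ring.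

Definition Creal (r : R) : Cx := mkCx r 0.
Definition Ci : Cx := mkCx 0 1.

Section Basic.
Context {H : HilbertSpace}.

Definition hnorm2 (x : H) : R := cre (hinner x x).
Definition re_inner (x y : H) : R := cre (hinner x y).
Definition im_inner (x y : H) : R := cim (hinner x y).

Lemma hadd_0l (x : H) : hadd hzero x = x.
Proof. rewrite hadd_comm; apply hadd_0. Qed.

Lemma hadd_oppl (x : H) : hadd (hopp x) x = hzero.
Proof. rewrite hadd_comm; apply hadd_opp. Qed.

Lemma hadd_cancel_l (x y z : H) : hadd x y = hadd x z -> y = z.
Proof.
  intros E. rewrite <- (hadd_0l y), <- (hadd_0l z), <- (hadd_oppl x).
  rewrite <- !hadd_assoc, E; reflexivity.
Qed.

Lemma hsub_add (x y : H) : hadd (hsub x y) y = x.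
Proof. unfold hsub. rewrite <- hadd_assoc, hadd_oppl, hadd_0; reflexivity. Qed.

Lemma hsub_eq0 (x y : H) : hsub x y = hzero -> x = y.
Proof. intros E. rewrite <- (hsub_add x y), E, hadd_0l; reflexivity. Qed.

Lemma hsub_diag (x : H) : hsub x x = hzero.
Proof. apply hadd_opp. Qed.

Lemma hscal_C0 (x : H) : hscal Defs.C0 x = hzero.
Proof.
  apply (hadd_cancel_l (hscal Defs.C0 x)). rewrite hadd_0, <- hscal_adds.
  f_equal. cx_ring.
Qed.

Lemma hscal_zero (a : Cx) : hscal a (@hzero H) = hzero.
Proof.
  apply (hadd_cancel_l (hscal a hzero)). rewrite hadd_0, <- hscal_addv, hadd_0; reflexivity.
Qed.

Lemma hopp_scal (x : H) : hopp x = hscal (Creal (-1)) x.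
Proof.
  apply (hadd_cancel_l x). rewrite hadd_opp.
  rewrite <- (hscal_1 x) at 1. rewrite <- hscal_adds.
  replace (Cadd Defs.C1 (Creal (-1))) with Defs.C0 by cx_ring. symmetry; apply hscal_C0.
Qed.

Lemma hopp_opp (x : H) : hopp (hopp x) = x.
Proof. apply (hadd_cancel_l (hopp x)). rewrite hadd_opp, hadd_oppl; reflexivity. Qed.

Lemma hopp_add (x y : H) : hopp (hadd x y) = hadd (hopp x) (hopp y).
Proof. rewrite !hopp_scal, hscal_addv; reflexivity. Qed.

Lemma hopp_zero : hopp (@hzero H) = hzero.
Proof. rewrite hopp_scal, hscal_zero; reflexivity. Qed.

Lemma hsub_0r (x : H) : hsub x hzero = x.
Proof. unfold hsub; rewrite hopp_zero, hadd_0; reflexivity. Qed.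

Lemma hopp_sub (x y : H) : hopp (hsub x y) = hsub y x.
Proof. unfold hsub. rewrite hopp_add, hopp_opp, hadd_comm; reflexivity. Qed.

Lemma hsub_sub_sub (a b c : H) : hsub a c = hadd (hsub a b) (hsub b c).
Proof.
  unfold hsub. rewrite <- hadd_assoc, (hadd_assoc (hopp b)), hadd_oppl, hadd_0l. reflexivity.
Qed.

Lemma hinner_0l (y : H) : hinner hzero y = Defs.C0.
Proof.
  rewrite <- (hscal_C0 hzero), hinner_scall. cx_ring.
Qed.

Lemma hinner_0r (y : H) : hinner y hzero = Defs.C0.
Proof. rewrite hinner_conj, hinner_0l. cx_ring. Qed.

Lemma hinner_addr (x y z : H) : hinner x (hadd y z) = Cadd (hinner x y) (hinner x z).
Proof.
  rewrite hinner_conj, hinner_addl, (hinner_conj y x), (hinner_conj z x).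
  destruct (hinner x y), (hinner x z); cx_ring.
Qed.

Lemma hinner_scalr (a : Cx) (x y : H) : hinner x (hscal a y) = Cmul (Cconj a) (hinner x y).
Proof.
  rewrite hinner_conj, hinner_scall, (hinner_conj y x).
  destruct (hinner x y), a; cx_ring.
Qed.

Lemma re_inner_sym (x y : H) : re_inner x y = re_inner y x.
Proof. unfold re_inner. rewrite (hinner_conj x y). reflexivity. Qed.

Lemma im_inner_sym (x y : H) : im_inner x y = - im_inner y x.
Proof. unfold im_inner. rewrite (hinner_conj x y). simpl; ring. Qed.

Lemma im_inner_diag (x : H) : im_inner x x = 0.
Proof. pose proof (im_inner_sym x x). lra. Qed.

Lemma re_inner_addl (x y z : H) : re_inner (hadd x y) z = re_inner x z + re_inner y z.
Proof. unfold re_inner; rewrite hinner_addl; reflexivity. Qed.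
Lemma re_inner_addr (x y z : H) : re_inner z (hadd x y) = re_inner z x + re_inner z y.
Proof. unfold re_inner; rewrite hinner_addr; reflexivity. Qed.
Lemma im_inner_addl (x y z : H) : im_inner (hadd x y) z = im_inner x z + im_inner y z.
Proof. unfold im_inner; rewrite hinner_addl; reflexivity. Qed.
Lemma im_inner_addr (x y z : H) : im_inner z (hadd x y) = im_inner z x + im_inner z y.
Proof. unfold im_inner; rewrite hinner_addr; reflexivity. Qed.

Lemma re_inner_scall (a : Cx) (x y : H) : re_inner (hscal a x) y = cre a * re_inner x y - cim a * im_inner x y.
Proof. unfold re_inner, im_inner; rewrite hinner_scall; reflexivity. Qed.
Lemma im_inner_scall (a : Cx) (x y : H) : im_inner (hscal a x) y = cre a * im_inner x y + cim a * re_inner x y.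
Proof. unfold re_inner, im_inner; rewrite hinner_scall; reflexivity. Qed.
Lemma re_inner_scalr (a : Cx) (x y : H) : re_inner x (hscal a y) = cre a * re_inner x y + cim a * im_inner x y.
Proof. unfold re_inner, im_inner; rewrite hinner_scalr; simpl; ring. Qed.
Lemma im_inner_scalr (a : Cx) (x y : H) : im_inner x (hscal a y) = cre a * im_inner x y - cim a * re_inner x y.
Proof. unfold re_inner, im_inner; rewrite hinner_scalr; simpl; ring. Qed.

Lemma re_inner_oppl (x y : H) : re_inner (hopp x) y = - re_inner x y.
Proof. rewrite hopp_scal, re_inner_scall; simpl; ring. Qed.
Lemma re_inner_oppr (x y : H) : re_inner y (hopp x) = - re_inner y x.
Proof. rewrite hopp_scal, re_inner_scalr; simpl; ring. Qed.
Lemma im_inner_oppl (x y : H) : im_inner (hopp x) y = - im_inner x y.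
Proof. rewrite hopp_scal, im_inner_scall; simpl; ring. Qed.
Lemma im_inner_oppr (x y : H) : im_inner y (hopp x) = - im_inner y x.
Proof. rewrite hopp_scal, im_inner_scalr; simpl; ring. Qed.
Lemma re_inner_subl (x y z : H) : re_inner (hsub x y) z = re_inner x z - re_inner y z.
Proof. unfold hsub; rewrite re_inner_addl, re_inner_oppl; ring. Qed.
Lemma re_inner_subr (x y z : H) : re_inner z (hsub x y) = re_inner z x - re_inner z y.
Proof. unfold hsub; rewrite re_inner_addr, re_inner_oppr; ring. Qed.
Lemma im_inner_subl (x y z : H) : im_inner (hsub x y) z = im_inner x z - im_inner y z.
Proof. unfold hsub; rewrite im_inner_addl, im_inner_oppl; ring. Qed.
Lemma im_inner_subr (x y z : H) : im_inner z (hsub x y) = im_inner z x - im_inner z y.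
Proof. unfold hsub; rewrite im_inner_addr, im_inner_oppr; ring. Qed.
Lemma re_inner_0l (y : H) : re_inner hzero y = 0.
Proof. unfold re_inner; rewrite hinner_0l; reflexivity. Qed.
Lemma re_inner_0r (y : H) : re_inner y hzero = 0.
Proof. unfold re_inner; rewrite hinner_0r; reflexivity. Qed.
Lemma im_inner_0l (y : H) : im_inner hzero y = 0.
Proof. unfold im_inner; rewrite hinner_0l; reflexivity. Qed.

Lemma hnorm2_re_inner (x : H) : hnorm2 x = re_inner x x.
Proof. reflexivity. Qed.

Lemma hnorm2_ge0 (x : H) : 0 <= hnorm2 x.
Proof. apply hinner_pos. Qed.

Lemma hnorm2_eq0 (x : H) : hnorm2 x = 0 -> x = hzero.
Proof.
  intros E. apply hinner_def. apply Cx_eq; [exact E|]. apply im_inner_diag.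
Qed.

Lemma hnorm2_zero : hnorm2 (@hzero H) = 0.
Proof. unfold hnorm2. rewrite hinner_0l. reflexivity. Qed.

Lemma hnorm2_add (x y : H) : hnorm2 (hadd x y) = hnorm2 x + 2 * re_inner x y + hnorm2 y.
Proof. rewrite !hnorm2_re_inner, re_inner_addl, !re_inner_addr, (re_inner_sym y x). ring. Qed.

Lemma hnorm2_sub (x y : H) : hnorm2 (hsub x y) = hnorm2 x - 2 * re_inner x y + hnorm2 y.
Proof. rewrite !hnorm2_re_inner, re_inner_subl, !re_inner_subr, (re_inner_sym y x). ring. Qed.

Lemma hnorm2_scal (a : Cx) (x : H) : hnorm2 (hscal a x) = (cre a * cre a + cim a * cim a) * hnorm2 x.
Proof.
  rewrite !hnorm2_re_inner, re_inner_scall, re_inner_scalr, im_inner_scalr, im_inner_diag. ring.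
Qed.

Lemma hnorm2_opp (x : H) : hnorm2 (hopp x) = hnorm2 x.
Proof. rewrite hopp_scal, hnorm2_scal; simpl; ring. Qed.

Lemma hnorm2_sub_sym (x y : H) : hnorm2 (hsub x y) = hnorm2 (hsub y x).
Proof. rewrite <- hopp_sub, hnorm2_opp; reflexivity. Qed.

Lemma cauchy_schwarz_re (x y : H) : re_inner x y * re_inner x y <= hnorm2 x * hnorm2 y.
Proof.
  destruct (Req_dec (hnorm2 y) 0) as [E|E].
  - apply hnorm2_eq0 in E; subst y. rewrite re_inner_0r, hnorm2_zero. lra.
  - pose proof (hnorm2_ge0 y). pose proof (hnorm2_ge0 x).
    set (t := - re_inner x y / hnorm2 y).
    pose proof (hnorm2_ge0 (hadd x (hscal (Creal t) y))) as P.
    rewrite hnorm2_add, hnorm2_scal, re_inner_scalr in P. simpl in P.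
    unfold t in P. field_simplify in P; [|lra].
    assert (0 <= (hnorm2 x * hnorm2 y - re_inner x y ^ 2) / hnorm2 y) by lra.
    apply Rmult_le_compat_r with (r := hnorm2 y) in H2; [|lra].
    field_simplify in H2; lra.
Qed.

Lemma hnorm2_scal_i (x : H) : hnorm2 (hscal Ci x) = hnorm2 x.
Proof. rewrite hnorm2_scal; simpl; ring. Qed.

Lemma im_inner_as_re_inner (x y : H) : im_inner x y = - re_inner (hscal Ci x) y.
Proof. rewrite re_inner_scall; simpl; ring. Qed.

Lemma cauchy_schwarz_im (x y : H) : im_inner x y * im_inner x y <= hnorm2 x * hnorm2 y.
Proof.
  rewrite im_inner_as_re_inner. rewrite <- (hnorm2_scal_i x).
  pose proof (cauchy_schwarz_re (hscal Ci x) y). nra.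
Qed.

Lemma hnorm_ge0 (x : H) : 0 <= hnorm x.
Proof. apply sqrt_pos. Qed.

Lemma hnorm_sq (x : H) : hnorm x * hnorm x = hnorm2 x.
Proof. apply sqrt_sqrt, hnorm2_ge0. Qed.

Lemma hnorm_le_iff (x : H) (a : R) : 0 <= a -> (hnorm x <= a <-> hnorm2 x <= a * a).
Proof.
  intros Ha. pose proof (hnorm_sq x). pose proof (hnorm_ge0 x). split; intros.
  - rewrite <- H0. apply Rmult_le_compat; lra.
  - destruct (Rle_dec (hnorm x) a); [auto|]. nra.
Qed.

Lemma hnorm_zero : hnorm (@hzero H) = 0.
Proof. unfold hnorm. fold (hnorm2 (@hzero H)). rewrite hnorm2_zero. apply sqrt_0. Qed.

Lemma hnorm_eq0 (x : H) : hnorm x = 0 -> x = hzero.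
Proof. intros E. apply hnorm2_eq0. rewrite <- hnorm_sq, E. ring. Qed.

Lemma hnorm_le0 (x : H) : hnorm x <= 0 -> x = hzero.
Proof. intros E. apply hnorm_eq0. pose proof (hnorm_ge0 x). lra. Qed.

Lemma cauchy_schwarz_re_norm (x y : H) : Rabs (re_inner x y) <= hnorm x * hnorm y.
Proof.
  pose proof (cauchy_schwarz_re x y). rewrite <- !hnorm_sq in H0.
  pose proof (hnorm_ge0 x). pose proof (hnorm_ge0 y).
  destruct (Rle_dec (Rabs (re_inner x y)) (hnorm x * hnorm y)); auto.
  exfalso. apply Rnot_le_lt in n. assert (Rabs (re_inner x y) * Rabs (re_inner x y) = re_inner x y * re_inner x y).
  { rewrite <- Rabs_mult. apply Rabs_pos_eq. apply Rle_0_sqr. }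
  pose proof (Rabs_pos (re_inner x y)).
  assert (hnorm x * hnorm y * (hnorm x * hnorm y) < Rabs (re_inner x y) * Rabs (re_inner x y)).
  { apply Rmult_le_0_lt_compat; try apply Rmult_le_pos; lra. }
  lra.
Qed.

Lemma cauchy_schwarz_im_norm (x y : H) : Rabs (im_inner x y) <= hnorm x * hnorm y.
Proof.
  pose proof (cauchy_schwarz_im x y). rewrite <- !hnorm_sq in H0.
  pose proof (hnorm_ge0 x). pose proof (hnorm_ge0 y).
  destruct (Rle_dec (Rabs (im_inner x y)) (hnorm x * hnorm y)); auto.
  exfalso. apply Rnot_le_lt in n. assert (Rabs (im_inner x y) * Rabs (im_inner x y) = im_inner x y * im_inner x y).
  { rewrite <- Rabs_mult. apply Rabs_pos_eq. apply Rle_0_sqr. }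
  pose proof (Rabs_pos (im_inner x y)).
  assert (hnorm x * hnorm y * (hnorm x * hnorm y) < Rabs (im_inner x y) * Rabs (im_inner x y)).
  { apply Rmult_le_0_lt_compat; try apply Rmult_le_pos; lra. }
  lra.
Qed.

Lemma hnorm_triangle (x y : H) : hnorm (hadd x y) <= hnorm x + hnorm y.
Proof.
  pose proof (hnorm_ge0 x). pose proof (hnorm_ge0 y).
  apply hnorm_le_iff; [lra|]. rewrite hnorm2_add, <- !hnorm_sq.
  pose proof (cauchy_schwarz_re_norm x y). pose proof (Rle_abs (re_inner x y)). nra.
Qed.

Lemma hnorm_scal_real (r : R) (x : H) : hnorm (hscal (Creal r) x) = Rabs r * hnorm x.
Proof.
  unfold hnorm. fold (hnorm2 (hscal (Creal r) x)) (hnorm2 x). rewrite hnorm2_scal. simpl.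
  rewrite Rmult_0_l, Rplus_0_r, sqrt_mult_alt; [| apply Rle_0_sqr].
  f_equal. apply (sqrt_Rsqr_abs r).
Qed.

Lemma hnorm_opp (x : H) : hnorm (hopp x) = hnorm x.
Proof. unfold hnorm. fold (hnorm2 (hopp x)) (hnorm2 x). rewrite hnorm2_opp; reflexivity. Qed.

Lemma hnorm_sub_sym (x y : H) : hnorm (hsub x y) = hnorm (hsub y x).
Proof. rewrite <- hopp_sub, hnorm_opp; reflexivity. Qed.

Lemma hnorm_sub_triangle (x y z : H) : hnorm (hsub x z) <= hnorm (hsub x y) + hnorm (hsub y z).
Proof. rewrite (hsub_sub_sub x y z). apply hnorm_triangle. Qed.

Lemma hnorm_sub_le (x y : H) : hnorm (hsub x y) <= hnorm x + hnorm y.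
Proof. unfold hsub. rewrite <- (hnorm_opp y). apply hnorm_triangle. Qed.

Lemma eq_by_re_inner (x y : H) : (forall z, re_inner x z = re_inner y z) -> x = y.
Proof.
  intros E. apply hsub_eq0, hnorm2_eq0. rewrite hnorm2_re_inner, re_inner_subl, !E.
  ring.
Qed.

Lemma norm_le_by_re_inner (u : H) (c : R) : 0 <= c -> (forall y, re_inner u y <= c * hnorm y) -> hnorm u <= c.
Proof.
  intros Hc Hy. specialize (Hy u). rewrite <- hnorm2_re_inner, <- hnorm_sq in Hy.
  pose proof (hnorm_ge0 u).
  destruct (Req_dec (hnorm u) 0); [lra|]. nra.
Qed.

End Basic.

Lemma Rle_of_le_add_eps (a b : R) : (forall eps, eps > 0 -> a <= b + eps) -> a <= b.
Proof.
  intros Hp. destruct (Rle_dec a b); auto. exfalso.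
  specialize (Hp ((a - b)/2)). lra.
Qed.

Section Grp.
Context {G : Group}.
Lemma gmul_invr (a : G) : gmul a (ginv a) = gone.
Proof.
  rewrite <- (gmul_1l (gmul a (ginv a))).
  rewrite <- (gmul_invl (ginv a)) at 1.
  rewrite <- gmul_assoc, (gmul_assoc (ginv a) a), gmul_invl, gmul_1l, gmul_invl.
  reflexivity.
Qed.
End Grp.

Section Lin.
Context {H : HilbertSpace}.

Lemma lin_zero (T : H -> H) : is_linear T -> T hzero = hzero.
Proof.
  intros [Ha Hs]. replace (@hzero H) with (hscal Defs.C0 (@hzero H)) at 1 by apply hscal_C0.
  rewrite Hs; apply hscal_C0.
Qed.
Lemma lin_opp (T : H -> H) : is_linear T -> forall x, T (hopp x) = hopp (T x).
Proof. intros [Ha Hs] x. rewrite !hopp_scal, Hs; reflexivity. Qed.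
Lemma lin_sub (T : H -> H) : is_linear T -> forall x y, T (hsub x y) = hsub (T x) (T y).
Proof. intros L x y. unfold hsub. rewrite (proj1 L), lin_opp; auto. Qed.
Lemma lin_add (T : H -> H) : is_linear T -> forall x y, T (hadd x y) = hadd (T x) (T y).
Proof. intros L; apply (proj1 L). Qed.
Lemma lin_scal (T : H -> H) : is_linear T -> forall a x, T (hscal a x) = hscal a (T x).
Proof. intros L; apply (proj2 L). Qed.

Lemma lin_id : is_linear (fun x : H => x).
Proof. split; auto. Qed.
Lemma lin_comp (S T : H -> H) : is_linear S -> is_linear T -> is_linear (fun x => S (T x)).
Proof.
  intros LS LT; split; intros.
  - rewrite (lin_add T), (lin_add S); auto.
  - rewrite (lin_scal T), (lin_scal S); auto.
Qed.

Definition opnorm_le (T : H -> H) (c : R) := forall x, hnorm (T x) <= c * hnorm x.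

Lemma opnorm_le_comp (S T : H -> H) a b : 0 <= a -> opnorm_le S a -> opnorm_le T b -> opnorm_le (fun x => S (T x)) (a * b).
Proof.
  intros Ha HS HT x. eapply Rle_trans; [apply HS|]. rewrite Rmult_assoc.
  apply Rmult_le_compat_l; auto.
Qed.

Lemma unitary_re_inner (U : H -> H) : is_unitary U -> forall x y, re_inner (U x) (U y) = re_inner x y.
Proof. intros [_ [Hi _]] x y. unfold re_inner. rewrite Hi. reflexivity. Qed.
Lemma unitary_hnorm2 (U : H -> H) : is_unitary U -> forall x, hnorm2 (U x) = hnorm2 x.
Proof. intros Hu x. apply unitary_re_inner; auto. Qed.
Lemma unitary_norm (U : H -> H) : is_unitary U -> forall x, hnorm (U x) = hnorm x.
Proof. intros Hu x. unfold hnorm. fold (hnorm2 (U x)) (hnorm2 x). rewrite unitary_hnorm2; auto. Qed.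
Lemma unitary_lin (U : H -> H) : is_unitary U -> is_linear U.
Proof. intros [L _]; exact L. Qed.
Lemma unitary_inj (U : H -> H) : is_unitary U -> forall x y, U x = U y -> x = y.
Proof.
  intros Hu x y E. apply hsub_eq0, hnorm_eq0.
  rewrite <- (unitary_norm U Hu), (lin_sub U (unitary_lin U Hu)), E, hsub_diag, hnorm_zero. reflexivity.
Qed.

Definition hconverges (u : nat -> H) (l : H) :=
  forall eps, eps > 0 -> exists N, forall n, (N <= n)%nat -> hnorm (hsub (u n) l) < eps.

Definition hcauchy (u : nat -> H) :=
  forall eps, eps > 0 -> exists N, forall m n, (N <= m)%nat -> (N <= n)%nat ->
    hnorm (hsub (u m) (u n)) < eps.

Lemma hcauchy_converges (u : nat -> H) : hcauchy u -> exists l, hconverges u l.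
Proof. intros C. apply (hcomplete u C). Qed.

Lemma hconverges_unique (u : nat -> H) l1 l2 : hconverges u l1 -> hconverges u l2 -> l1 = l2.
Proof.
  intros C1 C2. apply hsub_eq0, hnorm_le0. apply Rle_of_le_add_eps. intros eps He.
  destruct (C1 (eps/2)) as [N1 HN1]; [lra|]. destruct (C2 (eps/2)) as [N2 HN2]; [lra|].
  specialize (HN1 (N1+N2)%nat ltac:(lia)). specialize (HN2 (N1+N2)%nat ltac:(lia)).
  pose proof (hnorm_sub_triangle l1 (u (N1+N2)%nat) l2).
  rewrite (hnorm_sub_sym l1 (u _)) in H0. lra.
Qed.

Lemma geometric_increment_sum (u : nat -> H) (C q : R) :
  0 <= C -> 0 <= q < 1 -> (forall n, hnorm (hsub (u (S n)) (u n)) <= C * q ^ n) ->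
  forall n k, hnorm (hsub (u (n + k)%nat) (u n)) <= C * q ^ n * (1 - q ^ k) / (1 - q).
Proof.
  intros HC Hq Hs n k. induction k.
  - rewrite Nat.add_0_r, hsub_diag, hnorm_zero. simpl. unfold Rdiv. rewrite Rminus_diag, Rmult_0_r, Rmult_0_l. lra.
  - rewrite Nat.add_succ_r. eapply Rle_trans; [apply (hnorm_sub_triangle _ (u (n+k)%nat))|].
    specialize (Hs (n+k)%nat). rewrite pow_add in Hs.
    replace (C * q ^ n * (1 - q ^ S k) / (1 - q)) with (C * (q ^ n * q ^ k) + C * q ^ n * (1 - q ^ k) / (1 - q)).
    + lra.
    + simpl. field. lra.
Qed.

Lemma geometric_increments_converge (u : nat -> H) (C q : R) :
  0 <= C -> 0 <= q < 1 -> (forall n, hnorm (hsub (u (S n)) (u n)) <= C * q ^ n) ->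
  exists l, hconverges u l /\ forall n, hnorm (hsub (u n) l) <= C * q ^ n / (1 - q).
Proof.
  intros HC Hq Hs.
  assert (B : forall n m, (n <= m)%nat -> hnorm (hsub (u m) (u n)) <= C * q ^ n / (1 - q)).
  { intros n m Hnm. replace m with (n + (m - n))%nat by lia.
    eapply Rle_trans; [apply (geometric_increment_sum u C q HC Hq Hs)|].
    unfold Rdiv. pose proof (pow_le q (m - n) (proj1 Hq)). pose proof (pow_le q n (proj1 Hq)).
    assert (0 < / (1 - q)) by (apply Rinv_0_lt_compat; lra).
    assert (0 <= C * q ^ n) by (apply Rmult_le_pos; auto).
    set (d := / (1 - q)) in *. set (a := C * q ^ n) in *. set (p := q ^ (m - n)) in *. assert (0 <= a*p*d) by (apply Rmult_le_pos; [apply Rmult_le_pos|]; lra).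
    replace (a * (1 - p) * d) with (a*d - a*p*d) by ring; lra. }
  assert (Cy : hcauchy u).
  { intros eps He.
    destruct (pow_lt_1_zero q ltac:(rewrite Rabs_pos_eq; lra) (eps * (1 - q) / (C + 1))) as [N HN].
    { apply Rdiv_lt_0_compat; [apply Rmult_lt_0_compat|]; lra. }
    exists N. intros m n Hm Hn.
    assert (forall k, (N <= k)%nat -> C * q ^ k / (1 - q) < eps).
    { intros k Hk. specialize (HN k Hk). rewrite Rabs_pos_eq in HN by (apply pow_le; lra).
      apply (Rmult_lt_compat_l (C + 1)) in HN; [|lra].
      replace ((C + 1) * (eps * (1 - q) / (C + 1))) with (eps * (1 - q)) in HN by (field; lra).
      apply (Rmult_lt_reg_r (1 - q)); [lra|]. unfold Rdiv. rewrite Rmult_assoc, Rinv_l, Rmult_1_r by lra.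
      pose proof (pow_le q k (proj1 Hq)). nra. }
    destruct (Nat.le_ge_cases n m).
    + eapply Rle_lt_trans; [apply B; auto|]. auto.
    + rewrite hnorm_sub_sym. eapply Rle_lt_trans; [apply B; auto|]. auto. }
  destruct (hcauchy_converges u Cy) as [l Hl]. exists l. split; auto.
  intros n. apply Rle_of_le_add_eps. intros eps He. destruct (Hl eps He) as [N HN].
  specialize (HN (n + N)%nat ltac:(lia)). specialize (B n (n + N)%nat ltac:(lia)).
  pose proof (hnorm_sub_triangle (u n) (u (n + N)%nat) l).
  rewrite hnorm_sub_sym in B. lra.
Qed.

Definition hclosed (P : H -> Prop) := forall u l, (forall n, P (u n)) -> hconverges u l -> P l.

Definition hsubspace (P : H -> Prop) :=
  P hzero /\ (forall x y, P x -> P y -> P (hadd x y)) /\ (forall a x, P x -> P (hscal a x)).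

End Lin.

Ltac vector_eq := apply eq_by_re_inner; intro;
  repeat (rewrite ?re_inner_addl, ?re_inner_subl, ?re_inner_scall, ?re_inner_oppl, ?re_inner_0l,
                  ?im_inner_addl, ?im_inner_subl, ?im_inner_scall, ?im_inner_oppl, ?im_inner_0l); simpl; first [ring | field].

Lemma choice_nat {A : Type} (P : nat -> A -> Prop) : (forall n, exists a, P n a) -> exists f : nat -> A, forall n, P n (f n).
Proof.
  intros Hn. exists (fun n => proj1_sig (constructive_indefinite_description _ (Hn n))).
  intros n. exact (proj2_sig (constructive_indefinite_description _ (Hn n))).
Qed.

Lemma quadratic_nonneg_lin_coef0 (b c : R) : 0 <= c -> (forall t, 0 <= - 2 * t * b + t * t * c) -> b = 0.
Proof.
  intros Hc Ht. specialize (Ht (b / (c + 1))).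
  replace (- 2 * (b / (c + 1)) * b + b / (c + 1) * (b / (c + 1)) * c)
    with (- (b * b) * (c + 2) / ((c + 1) * (c + 1))) in Ht by (field; lra).
  assert (0 < (c + 1) * (c + 1)) by nra.
  apply (Rmult_le_compat_r ((c + 1) * (c + 1))) in Ht; [|lra].
  unfold Rdiv in Ht. rewrite Rmult_assoc, Rinv_l, Rmult_0_l, Rmult_1_r in Ht by lra.
  nra.
Qed.

Lemma inv_succ_eventually_lt (eps : R) : eps > 0 -> exists N : nat, forall n, (N <= n)%nat -> / (INR n + 1) < eps.
Proof.
  intros He. destruct (archimed (/ eps)) as [A _].
  exists (Z.to_nat (up (/ eps))). intros n Hn.
  assert (INR n + 1 > / eps).
  { apply le_INR in Hn. rewrite INR_IZR_INZ, Z2Nat.id in Hn.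
    - lra.
    - apply le_IZR. pose proof (Rinv_0_lt_compat eps He). lra. }
  rewrite <- (Rinv_inv eps). apply Rinv_lt_contravar; [|lra].
  apply Rmult_lt_0_compat; [apply Rinv_0_lt_compat; lra| pose proof (pos_INR n); lra].
Qed.

(** * Orthogonal projection and Riesz representation *)

Section Proj.
Context {H : HilbertSpace}.

Lemma parallelogram (a b : H) : hnorm2 (hsub a b) + hnorm2 (hadd a b) = 2 * hnorm2 a + 2 * hnorm2 b.
Proof. rewrite hnorm2_add, hnorm2_sub. ring. Qed.

Lemma orth_from_min (z m : H) :
  (forall t, hnorm2 z <= hnorm2 (hsub z (hscal (Creal t) m))) -> re_inner z m = 0.
Proof.
  intros Ht. apply (quadratic_nonneg_lin_coef0 (re_inner z m) (hnorm2 m) (hnorm2_ge0 m)). intros t.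
  specialize (Ht t). rewrite hnorm2_sub, hnorm2_scal, re_inner_scalr in Ht. simpl in Ht. nra.
Qed.

Variables (L : H -> Prop) (LS : hsubspace L) (x : H).

Lemma dist2_inf_exists : exists d2, 0 <= d2 /\
  (forall m, L m -> d2 <= hnorm2 (hsub x m)) /\
  (forall eps, eps > 0 -> exists m, L m /\ hnorm2 (hsub x m) < d2 + eps).
Proof.
  destruct LS as [L0 _].
  set (E := fun r => exists m, L m /\ r = - hnorm2 (hsub x m)).
  assert (Eb : bound E).
  { exists 0. intros r [m [_ ->]]. pose proof (hnorm2_ge0 (hsub x m)). lra. }
  assert (Ene : exists r, E r) by (exists (- hnorm2 (hsub x hzero)); exists hzero; auto).
  destruct (completeness E Eb Ene) as [s [Hub Hleast]].
  exists (- s). split; [|split].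
  - assert (is_upper_bound E 0).
    { intros r [m [_ ->]]. pose proof (hnorm2_ge0 (hsub x m)). lra. }
    apply Hleast in H0. lra.
  - intros m Hm. assert (E (- hnorm2 (hsub x m))) by (exists m; auto). apply Hub in H0. lra.
  - intros eps He. apply NNPP. intros Hn.
    assert (is_upper_bound E (s - eps)).
    { intros r [m [Hm ->]]. destruct (Rle_dec (- hnorm2 (hsub x m)) (s - eps)); auto.
      exfalso. apply Hn. exists m. split; auto. lra. }
    apply Hleast in H0. lra.
Qed.

Variables (d2 : R) (mm : nat -> H).
Hypotheses (Hd0 : 0 <= d2) (Hd2 : forall m, L m -> d2 <= hnorm2 (hsub x m))
  (Hmm : forall n, L (mm n) /\ hnorm2 (hsub x (mm n)) < d2 + / (INR n + 1)).

(* The midpoint of two almost-minimisers is in [L], so the parallelogram law forces them together. *)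
Lemma minimizing_seq_cauchy : hcauchy mm.
Proof.
  destruct LS as [_ [Ladd Lscal]].
  assert (mid : forall a b, hnorm2 (hsub (mm a) (mm b)) <= 2 * / (INR a + 1) + 2 * / (INR b + 1)).
  { intros a b. destruct (Hmm a) as [La Ha]. destruct (Hmm b) as [Lb Hb].
    pose proof (parallelogram (hsub x (mm a)) (hsub x (mm b))) as P.
    assert (E1 : hsub (hsub x (mm a)) (hsub x (mm b)) = hsub (mm b) (mm a)) by vector_eq.
    assert (E2 : hadd (hsub x (mm a)) (hsub x (mm b)) =
                 hscal (Creal 2) (hsub x (hscal (Creal (1/2)) (hadd (mm a) (mm b))))) by vector_eq.
    rewrite E1, E2, hnorm2_scal in P. simpl in P.
    pose proof (Hd2 _ (Lscal (Creal (1/2)) _ (Ladd _ _ La Lb))).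
    rewrite hnorm2_sub_sym. lra. }
  intros eps He. destruct (inv_succ_eventually_lt (eps * eps / 4)) as [N HN].
  { apply Rdiv_lt_0_compat; [nra|lra]. }
  exists N. intros a b Ha Hb. specialize (mid a b).
  pose proof (HN a Ha). pose proof (HN b Hb).
  assert (hnorm2 (hsub (mm a) (mm b)) < eps * eps) by lra.
  destruct (Rlt_dec (hnorm (hsub (mm a) (mm b))) eps); auto. exfalso.
  rewrite <- hnorm_sq in H2. apply Rnot_lt_le in n. nra.
Qed.

Lemma minimizing_seq_limit (l : H) : hconverges mm l -> hnorm2 (hsub x l) <= d2.
Proof.
  intros Hl. apply Rle_of_le_add_eps. intros eps He.
  set (K := d2 + 2).
  destruct (inv_succ_eventually_lt (eps / 3)) as [N1 HN1]; [lra|].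
  destruct (Hl (Rmin 1 (eps / (3 * (2 * K + 1))))) as [N2 HN2].
  { apply Rmin_glb_lt; [lra|]. apply Rdiv_lt_0_compat; [|unfold K]; lra. }
  set (n := (N1 + N2)%nat). specialize (HN1 n ltac:(unfold n; lia)). specialize (HN2 n ltac:(unfold n; lia)).
  destruct (Hmm n) as [_ Hn].
  set (b := hnorm (hsub x (mm n))). set (c := hnorm (hsub (mm n) l)).
  assert (Hb : b * b < d2 + / (INR n + 1)) by (unfold b; rewrite hnorm_sq; auto).
  assert (Hc1 : c < 1) by (pose proof (Rmin_l 1 (eps / (3 * (2 * K + 1)))); unfold c; lra).
  assert (Hc2 : c < eps / (3 * (2 * K + 1))) by (pose proof (Rmin_r 1 (eps / (3 * (2 * K + 1)))); unfold c; lra).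
  assert (c0 : 0 <= c) by apply hnorm_ge0. assert (b0 : 0 <= b) by apply hnorm_ge0.
  assert (bK : b <= K).
  { unfold K. assert (/ (INR n + 1) <= 1).
    { rewrite <- Rinv_1. apply Rinv_le_contravar; [lra|]. pose proof (pos_INR n); lra. }
    nra. }
  pose proof (hnorm_sub_triangle x (mm n) l) as T.
  fold b c in T. pose proof (hnorm_ge0 (hsub x l)).
  rewrite <- hnorm_sq.
  assert (hnorm (hsub x l) * hnorm (hsub x l) <= (b + c) * (b + c)) by nra.
  assert (c * (2 * K + 1) <= eps / 3).
  { apply (Rmult_lt_compat_r (3 * (2 * K + 1))) in Hc2; [|unfold K; lra].
    unfold Rdiv in Hc2. rewrite Rmult_assoc, Rinv_l in Hc2 by (unfold K; lra). nra. }
  nra.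
Qed.

End Proj.

Lemma nearest_point_exists {H : HilbertSpace} (L : H -> Prop) : hsubspace L -> hclosed L ->
  forall x, exists l, L l /\ forall m, L m -> hnorm2 (hsub x l) <= hnorm2 (hsub x m).
Proof.
  intros LS LC x.
  destruct (dist2_inf_exists L LS x) as [d2 [Hd0 [Hd1 Hd2]]].
  destruct (choice_nat (fun n m => L m /\ hnorm2 (hsub x m) < d2 + / (INR n + 1))) as [mm Hmm].
  { intros n. apply Hd2. apply Rinv_0_lt_compat. pose proof (pos_INR n); lra. }
  destruct (hcauchy_converges mm (minimizing_seq_cauchy L LS x d2 mm Hd1 Hmm)) as [l Hl].
  exists l. split; [apply (LC mm l); auto; intros n; apply Hmm|].
  intros m Hm. pose proof (minimizing_seq_limit L x d2 mm Hd0 Hmm l Hl). pose proof (Hd1 m Hm). lra.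
Qed.

Lemma nearest_point_orth {H : HilbertSpace} (L : H -> Prop) (x l : H) : hsubspace L -> L l ->
  (forall m, L m -> hnorm2 (hsub x l) <= hnorm2 (hsub x m)) ->
  forall m, L m -> hinner (hsub x l) m = Defs.C0.
Proof.
  intros [_ [Ladd Lscal]] Ll Hmin m Hm.
  assert (Hre : forall v, L v -> re_inner (hsub x l) v = 0).
  { intros v Hv. apply orth_from_min. intros t.
    replace (hsub (hsub x l) (hscal (Creal t) v)) with (hsub x (hadd l (hscal (Creal t) v))) by vector_eq.
    apply Hmin. apply Ladd; auto. }
  apply Cx_eq; simpl.
  - apply (Hre m Hm).
  - pose proof (Hre _ (Lscal Ci _ Hm)) as Hi. rewrite re_inner_scalr in Hi. simpl in Hi.
    fold (im_inner (hsub x l) m). lra.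
Qed.

Theorem orthogonal_projection_exists {H : HilbertSpace} (L : H -> Prop) : hsubspace L -> hclosed L ->
  forall x, exists l, L l /\ forall m, L m -> hinner (hsub x l) m = Defs.C0.
Proof.
  intros LS LC x. destruct (nearest_point_exists L LS LC x) as [l [Ll Hmin]].
  exists l. split; auto. apply (nearest_point_orth L x l LS Ll Hmin).
Qed.

Section Proj2.
Context {H : HilbertSpace}.

Definition orth (L : H -> Prop) (z : H) := forall m, L m -> hinner z m = Defs.C0.

Lemma orth_re_inner (L : H -> Prop) z m : orth L z -> L m -> re_inner z m = 0.
Proof. intros O Hm. unfold re_inner. rewrite (O m Hm). reflexivity. Qed.
Lemma orth_im_inner (L : H -> Prop) z m : orth L z -> L m -> im_inner z m = 0.
Proof. intros O Hm. unfold im_inner. rewrite (O m Hm). reflexivity. Qed.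
Lemma orth_intro (L : H -> Prop) z : (forall m, L m -> re_inner z m = 0 /\ im_inner z m = 0) -> orth L z.
Proof. intros Hm m Lm. destruct (Hm m Lm). apply Cx_eq; auto. Qed.

Lemma orth_decomposition_unique (L : H -> Prop) : hsubspace L -> forall x l1 l2,
  L l1 -> L l2 -> orth L (hsub x l1) -> orth L (hsub x l2) -> l1 = l2.
Proof.
  intros [L0 [Ladd LS]] x l1 l2 H1 H2 O1 O2.
  assert (Ld : L (hsub l1 l2)).
  { unfold hsub. apply Ladd; auto. rewrite hopp_scal. apply LS; auto. }
  apply hsub_eq0, hnorm2_eq0.
  assert (hsub l1 l2 = hsub (hsub x l2) (hsub x l1)) by vector_eq.
  rewrite hnorm2_re_inner. rewrite H0 at 1. rewrite re_inner_subl.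
  rewrite (orth_re_inner L _ _ O1 Ld), (orth_re_inner L _ _ O2 Ld). ring.
Qed.

Variable (L : H -> Prop) (LS : hsubspace L) (LC : hclosed L).

Definition proj (x : H) : H := proj1_sig (constructive_indefinite_description _ (orthogonal_projection_exists L LS LC x)).

Lemma proj_in x : L (proj x).
Proof. exact (proj1 (proj2_sig (constructive_indefinite_description _ (orthogonal_projection_exists L LS LC x)))). Qed.
Lemma proj_orth x : orth L (hsub x (proj x)).
Proof. exact (proj2 (proj2_sig (constructive_indefinite_description _ (orthogonal_projection_exists L LS LC x)))). Qed.

Lemma proj_unique x l : L l -> orth L (hsub x l) -> proj x = l.
Proof. intros Hl O. apply (orth_decomposition_unique L LS x); auto using proj_in, proj_orth. Qed.

Lemma proj_linear : is_linear proj.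
Proof.
  destruct LS as [L0 [Ladd LSc]]. split.
  - intros x y. apply proj_unique; [apply Ladd; apply proj_in|].
    apply orth_intro. intros m Hm.
    assert (hsub (hadd x y) (hadd (proj x) (proj y)) = hadd (hsub x (proj x)) (hsub y (proj y))) by vector_eq.
    rewrite H0, re_inner_addl, im_inner_addl.
    rewrite (orth_re_inner L _ _ (proj_orth x) Hm), (orth_re_inner L _ _ (proj_orth y) Hm),
      (orth_im_inner L _ _ (proj_orth x) Hm), (orth_im_inner L _ _ (proj_orth y) Hm). split; ring.
  - intros a x. apply proj_unique; [apply LSc; apply proj_in|].
    apply orth_intro. intros m Hm.
    assert (hsub (hscal a x) (hscal a (proj x)) = hscal a (hsub x (proj x))) by vector_eq.
    rewrite H0, re_inner_scall, im_inner_scall.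
    rewrite (orth_re_inner L _ _ (proj_orth x) Hm), (orth_im_inner L _ _ (proj_orth x) Hm). split; ring.
Qed.

Lemma proj_pythagoras x : hnorm2 x = hnorm2 (proj x) + hnorm2 (hsub x (proj x)).
Proof.
  assert (x = hadd (proj x) (hsub x (proj x))) by vector_eq.
  rewrite H0 at 1. rewrite hnorm2_add. rewrite re_inner_sym, (orth_re_inner L _ _ (proj_orth x) (proj_in x)). ring.
Qed.

Lemma proj_compl_norm_le x : hnorm (hsub x (proj x)) <= hnorm x.
Proof.
  apply hnorm_le_iff; [apply hnorm_ge0|]. rewrite hnorm_sq, (proj_pythagoras x).
  pose proof (hnorm2_ge0 (proj x)). lra.
Qed.

Lemma proj_id_on x : L x -> proj x = x.
Proof. intros Hx. apply proj_unique; auto. rewrite hsub_diag. intros m _. apply hinner_0l. Qed.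

End Proj2.

Lemma Rabs_le0_eq0 (x : R) : Rabs x <= 0 -> x = 0.
Proof. intros Hx. pose proof (Rle_abs x). pose proof (Rle_abs (-x)). rewrite Rabs_Ropp in H0. lra. Qed.

Section Riesz.
Context {H : HilbertSpace}.
Variables (phi : H -> Cx) (M : R).
Hypotheses (Ha : forall x y, phi (hadd x y) = Cadd (phi x) (phi y))
  (Hs : forall a y, phi (hscal a y) = Cmul a (phi y))
  (Hb : forall y, Rabs (cre (phi y)) <= M * hnorm y).

Lemma im_bound_of_re_bound y : Rabs (cim (phi y)) <= M * hnorm y.
Proof.
  specialize (Hb (hscal Ci y)). rewrite Hs in Hb. simpl in Hb.
  unfold hnorm in Hb. fold (hnorm2 (hscal Ci y)) in Hb. rewrite hnorm2_scal_i in Hb.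
  replace (0 * cre (phi y) - 1 * cim (phi y)) with (- cim (phi y)) in Hb by ring.
  rewrite Rabs_Ropp in Hb. exact Hb.
Qed.

Lemma functional_zero : phi hzero = Defs.C0.
Proof. rewrite <- (hscal_C0 hzero), Hs. apply Cx_eq; simpl; ring. Qed.

Lemma functional_sub x y : phi (hsub x y) = mkCx (cre (phi x) - cre (phi y)) (cim (phi x) - cim (phi y)).
Proof. unfold hsub. rewrite Ha, hopp_scal, Hs. apply Cx_eq; simpl; ring. Qed.

Definition kernel (y : H) : Prop := phi y = Defs.C0.

Lemma kernel_subspace : hsubspace kernel.
Proof.
  split; [|split]; unfold kernel.
  - exact functional_zero.
  - intros x y Hx Hy. rewrite Ha, Hx, Hy. apply Cx_eq; simpl; ring.
  - intros a x Hx. rewrite Hs, Hx. apply Cx_eq; simpl; ring.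
Qed.

Lemma kernel_closed : hclosed kernel.
Proof.
  intros u l Hu Hl. unfold kernel.
  assert (Hdist : forall n, Rabs (cre (phi l)) <= M * hnorm (hsub l (u n)) /\
                            Rabs (cim (phi l)) <= M * hnorm (hsub l (u n))).
  { intros n. pose proof (Hb (hsub l (u n))). pose proof (im_bound_of_re_bound (hsub l (u n))).
    rewrite functional_sub, (Hu n) in H0, H1. simpl in H0, H1.
    rewrite Rminus_0_r in H0, H1. auto. }
  assert (Lim : forall eps, eps > 0 -> exists n, M * hnorm (hsub l (u n)) < eps).
  { intros eps He. destruct (Hl (eps / (Rabs M + 1))) as [N HN].
    { apply Rdiv_lt_0_compat; [lra|pose proof (Rabs_pos M); lra]. }
    exists N. specialize (HN N (le_n _)). rewrite hnorm_sub_sym in HN.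
    pose proof (Rle_abs M). pose proof (hnorm_ge0 (hsub l (u N))). pose proof (Rabs_pos M).
    apply (Rmult_lt_compat_l (Rabs M + 1)) in HN; [|lra].
    replace ((Rabs M + 1) * (eps / (Rabs M + 1))) with eps in HN by (field; lra). nra. }
  apply Cx_eq; simpl; apply Rabs_le0_eq0; apply Rle_of_le_add_eps; intros eps He;
    destruct (Lim eps He) as [n Hn]; destruct (Hdist n); lra.
Qed.

(* The representing vector is a multiple of any nonzero [w] orthogonal to the kernel:
   [phi (y) w - phi (w) y] lies in the kernel for every [y]. *)
Lemma riesz_from_orth_kernel (w : H) : w <> hzero -> (forall m, kernel m -> hinner w m = Defs.C0) ->
  exists z, forall y, phi y = hinner y z.
Proof.
  intros Hw Ow. assert (nw : hnorm2 w <> 0) by (intros E; apply Hw, hnorm2_eq0, E).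
  set (p := phi w). set (n := hnorm2 w).
  exists (hscal (Cmul (Cconj p) (Creal (/ n))) w).
  intros y.
  assert (Kv : kernel (hsub (hscal p y) (hscal (phi y) w))).
  { unfold kernel. rewrite functional_sub, !Hs. fold p. apply Cx_eq; simpl; ring. }
  pose proof (Ow _ Kv) as O.
  assert (O1 : re_inner w (hsub (hscal p y) (hscal (phi y) w)) = 0) by (unfold re_inner; rewrite O; reflexivity).
  assert (O2 : im_inner w (hsub (hscal p y) (hscal (phi y) w)) = 0) by (unfold im_inner; rewrite O; reflexivity).
  rewrite re_inner_subr, !re_inner_scalr in O1. rewrite im_inner_subr, !im_inner_scalr in O2.
  rewrite im_inner_diag in O1, O2. rewrite <- hnorm2_re_inner in O1, O2. fold n in O1, O2.
  rewrite (re_inner_sym w y), (im_inner_sym w y) in O1, O2.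
  apply Cx_eq.
  - fold (re_inner y (hscal (Cmul (Cconj p) (Creal (/ n))) w)). rewrite re_inner_scalr. simpl.
    apply (Rmult_eq_reg_r n); [|exact nw]. field_simplify; [|exact nw]. nra.
  - fold (im_inner y (hscal (Cmul (Cconj p) (Creal (/ n))) w)). rewrite im_inner_scalr. simpl.
    apply (Rmult_eq_reg_r n); [|exact nw]. field_simplify; [|exact nw]. nra.
Qed.

Theorem riesz_representation : exists z, forall y, phi y = hinner y z.
Proof.
  destruct (classic (forall y, phi y = Defs.C0)) as [Z|NZ].
  { exists hzero. intros y. rewrite Z, hinner_0r. reflexivity. }
  apply not_all_ex_not in NZ. destruct NZ as [y0 Hy0].
  destruct (orthogonal_projection_exists kernel kernel_subspace kernel_closed y0) as [l [Kl Ol]].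
  apply (riesz_from_orth_kernel (hsub y0 l)); [|exact Ol].
  intros E. apply Hy0. apply hsub_eq0 in E. rewrite E. exact Kl.
Qed.

End Riesz.

Section Reps.
Context {G : Group} {H : HilbertSpace}.
Variable rho : G -> H -> H.
Hypothesis Hr : unitary_rep rho.

Lemma rep_inv_l g x : rho (ginv g) (rho g x) = x.
Proof. destruct Hr as [[Hm H1] _]. rewrite <- Hm, gmul_invl, H1; reflexivity. Qed.
Lemma rep_inv_r g x : rho g (rho (ginv g) x) = x.
Proof. destruct Hr as [[Hm H1] _]. rewrite <- Hm, gmul_invr, H1; reflexivity. Qed.
Lemma rep_unit g : is_unitary (rho g).
Proof. apply (proj2 Hr). Qed.
Lemma rep_lin g : is_linear (rho g).
Proof. apply unitary_lin, rep_unit. Qed.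
Lemma rep_norm g x : hnorm (rho g x) = hnorm x.
Proof. apply unitary_norm, rep_unit. Qed.
Lemma rep_adj g x y : hinner (rho g x) y = hinner x (rho (ginv g) y).
Proof.
  rewrite <- (rep_inv_r g y) at 1. destruct (rep_unit g) as [_ [Hi _]]. apply Hi.
Qed.
Lemma rep_re_inner_move g u w : re_inner u (rho g w) = re_inner (rho (ginv g) u) w.
Proof. rewrite <- (unitary_re_inner _ (rep_unit (ginv g)) u (rho g w)), rep_inv_l. reflexivity. Qed.
End Reps.

Section Ops.
Context {H : HilbertSpace}.

Definition selfadjoint (S : H -> H) := forall u v, hinner (S u) v = hinner u (S v).
Definition commute (S T : H -> H) := forall x, S (T x) = T (S x).

Lemma lin_plus (S T : H -> H) : is_linear S -> is_linear T -> is_linear (fun x => hadd (S x) (T x)).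
Proof.
  intros LS LT; split; intros.
  - rewrite (lin_add S), (lin_add T); auto. apply eq_by_re_inner; intro z; rewrite !re_inner_addl; ring.
  - rewrite (lin_scal S), (lin_scal T), hscal_addv; auto.
Qed.

Lemma lin_rscal (c : Cx) (S : H -> H) : is_linear S -> is_linear (fun x => hscal c (S x)).
Proof.
  intros LS; split; intros.
  - rewrite (lin_add S), hscal_addv; auto.
  - rewrite (lin_scal S), !hscal_assoc; auto. f_equal. destruct a, c; cx_ring.
Qed.

Lemma opnorm_le_plus (S T : H -> H) a b : opnorm_le S a -> opnorm_le T b -> opnorm_le (fun x => hadd (S x) (T x)) (a + b).
Proof.
  intros HS HT x. eapply Rle_trans; [apply hnorm_triangle|]. specialize (HS x); specialize (HT x). lra.
Qed.

Lemma opnorm_le_rscal (c : R) (S : H -> H) a : opnorm_le S a -> opnorm_le (fun x => hscal (Creal c) (S x)) (Rabs c * a).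
Proof.
  intros HS x. rewrite hnorm_scal_real, Rmult_assoc. apply Rmult_le_compat_l; [apply Rabs_pos|auto].
Qed.

Lemma opnorm_le_mono (S : H -> H) a b : a <= b -> opnorm_le S a -> opnorm_le S b.
Proof. intros Hab HS x. eapply Rle_trans; [apply HS|]. apply Rmult_le_compat_r; auto. apply hnorm_ge0. Qed.

Lemma opdist_le_comp (S1 S2 T1 T2 : H -> H) a b d1 d2 : is_linear S1 -> 0 <= a -> 0 <= d1 ->
  opnorm_le S1 a -> opnorm_le T2 b -> opdist_le S1 S2 d1 -> opdist_le T1 T2 d2 ->
  opdist_le (fun x => S1 (T1 x)) (fun x => S2 (T2 x)) (a * d2 + d1 * b).
Proof.
  intros L1 Ha Hd HS HT D1 D2 x.
  assert (hsub (S1 (T1 x)) (S2 (T2 x)) = hadd (S1 (hsub (T1 x) (T2 x))) (hsub (S1 (T2 x)) (S2 (T2 x)))).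
  { rewrite (lin_sub S1 L1). vector_eq. }
  rewrite H0. eapply Rle_trans; [apply hnorm_triangle|].
  pose proof (HS (hsub (T1 x) (T2 x))). pose proof (D2 x). pose proof (D1 (T2 x)). pose proof (HT x).
  assert (a * hnorm (hsub (T1 x) (T2 x)) <= a * (d2 * hnorm x)) by (apply Rmult_le_compat_l; auto).
  assert (d1 * hnorm (T2 x) <= d1 * (b * hnorm x)) by (apply Rmult_le_compat_l; auto).
  nra.
Qed.

Lemma eq_by_re_inner_r (x y : H) : (forall z, re_inner z x = re_inner z y) -> x = y.
Proof. intros E. apply eq_by_re_inner. intros z. rewrite (re_inner_sym x), (re_inner_sym y). auto. Qed.

Lemma selfadjoint_plus (S T : H -> H) : selfadjoint S -> selfadjoint T -> selfadjoint (fun x => hadd (S x) (T x)).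
Proof. intros HS HT u v. rewrite hinner_addl, hinner_addr, HS, HT. reflexivity. Qed.
Lemma selfadjoint_rscal (c : R) (S : H -> H) : selfadjoint S -> selfadjoint (fun x => hscal (Creal c) (S x)).
Proof. intros HS u v. rewrite hinner_scall, hinner_scalr, HS. f_equal. cx_ring. Qed.
Lemma selfadjoint_comp (S T : H -> H) : selfadjoint S -> selfadjoint T -> commute S T -> selfadjoint (fun x => S (T x)).
Proof. intros HS HT C u v. rewrite HS, HT, C. reflexivity. Qed.
Lemma selfadjoint_id : selfadjoint (fun x : H => x).
Proof. intros u v; reflexivity. Qed.

End Ops.

(** * Operator limits at rate [4^-n] *)

Lemma quarter_pow_small (K : R) : 0 <= K -> forall eps, eps > 0 -> exists n, K * (1/4) ^ n < eps.
Proof.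
  intros HK eps He.
  destruct (pow_lt_1_zero (1/4) ltac:(rewrite Rabs_pos_eq; lra) (eps / (K + 1))) as [N HN].
  { apply Rdiv_lt_0_compat; lra. }
  exists N. specialize (HN N (le_n _)). rewrite Rabs_pos_eq in HN by (apply pow_le; lra).
  apply (Rmult_lt_compat_l (K + 1)) in HN; [|lra].
  replace ((K + 1) * (eps / (K + 1))) with eps in HN by (field; lra).
  pose proof (pow_le (1/4) N ltac:(lra)). nra.
Qed.

Lemma real_eq0_of_quarter_bound (a K : R) : 0 <= K -> (forall n, Rabs a <= K * (1/4) ^ n) -> a = 0.
Proof.
  intros HK Ha. apply Rabs_le0_eq0. apply Rle_of_le_add_eps. intros eps He.
  destruct (quarter_pow_small K HK eps He) as [n Hn]. specialize (Ha n). lra.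
Qed.

Section Lims.
Context {H : HilbertSpace}.

Lemma hnorm_scal_le (a : Cx) (v : H) : hnorm (hscal a v) <= (Rabs (cre a) + Rabs (cim a)) * hnorm v.
Proof.
  pose proof (Rabs_pos (cre a)). pose proof (Rabs_pos (cim a)). pose proof (hnorm_ge0 v).
  apply hnorm_le_iff; [nra|]. rewrite hnorm2_scal, <- hnorm_sq.
  assert (cre a * cre a = Rabs (cre a) * Rabs (cre a)) by (rewrite <- Rabs_mult; symmetry; apply Rabs_pos_eq; apply Rle_0_sqr).
  assert (cim a * cim a = Rabs (cim a) * Rabs (cim a)) by (rewrite <- Rabs_mult; symmetry; apply Rabs_pos_eq; apply Rle_0_sqr).
  rewrite H3, H4. set (p := Rabs (cre a)) in *. set (q := Rabs (cim a)) in *. set (m := hnorm v) in *.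
  assert (0 <= p * q * (m * m)) by (apply Rmult_le_pos; apply Rmult_le_pos; auto).
  replace ((p + q) * m * ((p + q) * m)) with ((p * p + q * q) * (m * m) + 2 * (p * q * (m * m))) by ring.
  lra.
Qed.

Lemma vec_eq0_of_quarter_bound (v : H) (K : R) : 0 <= K -> (forall n, hnorm v <= K * (1/4) ^ n) -> v = hzero.
Proof.
  intros HK Hv. apply hnorm_le0. apply Rle_of_le_add_eps. intros eps He.
  destruct (quarter_pow_small K HK eps He) as [n Hn]. specialize (Hv n). lra.
Qed.

Variables (Sn : nat -> H -> H) (S : H -> H) (K : R).
Hypothesis HK : 0 <= K.
Hypothesis Hconv : forall n, opdist_le (Sn n) S (K * (1/4) ^ n).
Hypothesis Hlin : forall n, is_linear (Sn n).

Let rate n := K * (1/4) ^ n.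
Lemma rate_ge0 n : 0 <= rate n.
Proof. unfold rate. apply Rmult_le_pos; auto. apply pow_le; lra. Qed.

Lemma quarter_limit_linear : is_linear S.
Proof.
  split.
  - intros x y. apply hsub_eq0. apply (vec_eq0_of_quarter_bound _ (K * (hnorm (hadd x y) + hnorm x + hnorm y))).
    { pose proof (hnorm_ge0 (hadd x y)). pose proof (hnorm_ge0 x). pose proof (hnorm_ge0 y). nra. }
    intros n.
    assert (hsub (S (hadd x y)) (hadd (S x) (S y)) =
      hadd (hopp (hsub (Sn n (hadd x y)) (S (hadd x y))))
           (hadd (hsub (Sn n x) (S x)) (hsub (Sn n y) (S y)))).
    { rewrite (lin_add _ (Hlin n)). vector_eq. }
    rewrite H0. eapply Rle_trans; [apply hnorm_triangle|]. rewrite hnorm_opp.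
    pose proof (Hconv n (hadd x y)). pose proof (Hconv n x). pose proof (Hconv n y).
    pose proof (hnorm_triangle (hsub (Sn n x) (S x)) (hsub (Sn n y) (S y))). nra.
  - intros a x. apply hsub_eq0.
    set (ka := Rabs (cre a) + Rabs (cim a)).
    assert (0 <= ka) by (unfold ka; pose proof (Rabs_pos (cre a)); pose proof (Rabs_pos (cim a)); lra).
    apply (vec_eq0_of_quarter_bound _ (K * (hnorm (hscal a x) + ka * hnorm x))).
    { pose proof (hnorm_ge0 (hscal a x)). pose proof (hnorm_ge0 x).
      apply Rmult_le_pos; [auto|]. apply Rplus_le_le_0_compat; [auto| apply Rmult_le_pos; auto]. }
    intros n.
    assert (hsub (S (hscal a x)) (hscal a (S x)) =
      hadd (hopp (hsub (Sn n (hscal a x)) (S (hscal a x))))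
           (hscal a (hsub (Sn n x) (S x)))).
    { rewrite (lin_scal _ (Hlin n)). vector_eq. }
    rewrite H1. eapply Rle_trans; [apply hnorm_triangle|]. rewrite hnorm_opp.
    pose proof (Hconv n (hscal a x)). pose proof (Hconv n x).
    pose proof (hnorm_scal_le a (hsub (Sn n x) (S x))). fold ka in H4.
    assert (ka * hnorm (hsub (Sn n x) (S x)) <= ka * (K * (1/4)^n * hnorm x)) by (apply Rmult_le_compat_l; auto).
    nra.
Qed.

Lemma quarter_limit_opnorm_le (r : R) : (forall n, opnorm_le (Sn n) r) -> opnorm_le S r.
Proof.
  intros Hb x. apply Rle_of_le_add_eps. intros eps He.
  destruct (quarter_pow_small (K * (hnorm x + 1))) with (eps := eps) as [n Hn]; auto.
  { pose proof (hnorm_ge0 x). nra. }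
  pose proof (Hconv n x). pose proof (Hb n x).
  pose proof (hnorm_sub_le (S x) (Sn n x)). rewrite hnorm_sub_sym in H2.
  pose proof (hnorm_triangle (hsub (S x) (Sn n x)) (Sn n x)). rewrite hsub_add in H3.
  rewrite hnorm_sub_sym in H3. pose proof (rate_ge0 n). unfold rate in H4.
  pose proof (hnorm_ge0 x). nra.
Qed.

Lemma quarter_limit_commute (V : H -> H) (v : R) : is_linear V -> 0 <= v -> opnorm_le V v ->
  (forall n, commute (Sn n) V) -> commute S V.
Proof.
  intros LV Hv BV Hc x. apply hsub_eq0.
  apply (vec_eq0_of_quarter_bound _ (K * (hnorm (V x) + v * hnorm x))).
  { pose proof (hnorm_ge0 (V x)). pose proof (hnorm_ge0 x).
    apply Rmult_le_pos; [auto|]. apply Rplus_le_le_0_compat; [auto| apply Rmult_le_pos; auto]. }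
  intros n.
  assert (hsub (S (V x)) (V (S x)) =
     hadd (hopp (hsub (Sn n (V x)) (S (V x)))) (V (hsub (Sn n x) (S x)))).
  { rewrite (lin_sub V LV), <- (Hc n x). vector_eq. }
  rewrite H0. eapply Rle_trans; [apply hnorm_triangle|]. rewrite hnorm_opp.
  pose proof (Hconv n (V x)). pose proof (Hconv n x). pose proof (BV (hsub (Sn n x) (S x))).
  assert (v * hnorm (hsub (Sn n x) (S x)) <= v * (K * (1/4)^n * hnorm x)) by (apply Rmult_le_compat_l; auto).
  nra.
Qed.

Lemma quarter_limit_selfadjoint : (forall n, selfadjoint (Sn n)) -> selfadjoint S.
Proof.
  intros Hs u v.
  assert (Hb : forall n, Rabs (re_inner (S u) v - re_inner u (S v)) <= (2 * K * hnorm u * hnorm v) * (1/4)^n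
                   /\ Rabs (im_inner (S u) v - im_inner u (S v)) <= (2 * K * hnorm u * hnorm v) * (1/4)^n).
  { intros n.
    assert (E1 : re_inner (S u) v - re_inner u (S v) = - re_inner (hsub (Sn n u) (S u)) v + re_inner u (hsub (Sn n v) (S v))).
    { rewrite re_inner_subl, re_inner_subr. assert (re_inner (Sn n u) v = re_inner u (Sn n v)) by (unfold re_inner; rewrite Hs; reflexivity). lra. }
    assert (E2 : im_inner (S u) v - im_inner u (S v) = - im_inner (hsub (Sn n u) (S u)) v + im_inner u (hsub (Sn n v) (S v))).
    { rewrite im_inner_subl, im_inner_subr. assert (im_inner (Sn n u) v = im_inner u (Sn n v)) by (unfold im_inner; rewrite Hs; reflexivity). lra. }
    pose proof (Hconv n u). pose proof (Hconv n v).
    pose proof (hnorm_ge0 u). pose proof (hnorm_ge0 v).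
    pose proof (cauchy_schwarz_re_norm (hsub (Sn n u) (S u)) v). pose proof (cauchy_schwarz_re_norm u (hsub (Sn n v) (S v))).
    pose proof (cauchy_schwarz_im_norm (hsub (Sn n u) (S u)) v). pose proof (cauchy_schwarz_im_norm u (hsub (Sn n v) (S v))).
    pose proof (rate_ge0 n). unfold rate in H8.
    assert (hnorm (hsub (Sn n u) (S u)) * hnorm v <= K * (1/4)^n * hnorm u * hnorm v) by (apply Rmult_le_compat_r; auto).
    assert (hnorm u * hnorm (hsub (Sn n v) (S v)) <= hnorm u * (K * (1/4)^n * hnorm v)) by (apply Rmult_le_compat_l; auto).
    rewrite E1, E2. split.
    - eapply Rle_trans; [apply Rabs_triang|]. rewrite Rabs_Ropp. nra.
    - eapply Rle_trans; [apply Rabs_triang|]. rewrite Rabs_Ropp. nra. }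
  assert (0 <= 2 * K * hnorm u * hnorm v) by (apply Rmult_le_pos; [apply Rmult_le_pos; [lra| apply hnorm_ge0] | apply hnorm_ge0]).
  apply Cx_eq.
  - fold (re_inner (S u) v) (re_inner u (S v)). apply Rminus_diag_uniq. apply (real_eq0_of_quarter_bound _ _ H0). intros n; apply Hb.
  - fold (im_inner (S u) v) (im_inner u (S v)). apply Rminus_diag_uniq. apply (real_eq0_of_quarter_bound _ _ H0). intros n; apply Hb.
Qed.

End Lims.

Section Isom.
Context {H : HilbertSpace}.
Variables (W : H -> H) (LW : is_linear W) (IW : forall x y, hinner (W x) (W y) = hinner x y).

Definition range (v : H) : Prop := exists x, W x = v.

Lemma isometry_norm x : hnorm (W x) = hnorm x.
Proof. unfold hnorm. rewrite IW. reflexivity. Qed.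

Lemma range_subspace : hsubspace range.
Proof.
  split; [|split].
  - exists hzero. apply lin_zero; auto.
  - intros a b [x Hx] [y Hy]. exists (hadd x y). rewrite (lin_add W LW), Hx, Hy. reflexivity.
  - intros a b [x Hx]. exists (hscal a x). rewrite (lin_scal W LW), Hx. reflexivity.
Qed.

Lemma isometry_range_closed : hclosed range.
Proof.
  intros u l Hu Hl. destruct (choice_nat (fun n x => W x = u n)) as [xs Hxs]; [apply Hu|].
  assert (Cy : hcauchy xs).
  { intros eps He.
    destruct (Hl (eps/2)) as [N HN]; [lra|]. exists N. intros m n Hm Hn.
    rewrite <- isometry_norm, (lin_sub W LW), !Hxs.
    pose proof (HN m Hm). pose proof (HN n Hn). pose proof (hnorm_sub_triangle (u m) l (u n)).
    rewrite (hnorm_sub_sym l) in H2. lra. }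
  destruct (hcauchy_converges xs Cy) as [x Hx]. exists x.
  apply (hconverges_unique u); auto. intros eps He. destruct (Hx eps He) as [N HN]. exists N. intros n Hn.
  rewrite <- Hxs, <- (lin_sub W LW), isometry_norm. auto.
Qed.

(* A vector [w] orthogonal to the range satisfies [|w|^2 = <w, w - W w> <= k |w|^2]. *)
Lemma isometry_near_id_surjective (k : R) : k < 1 -> opdist_le W (fun x => x) k ->
  forall y, exists x, W x = y.
Proof.
  intros Hk DW y.
  destruct (orthogonal_projection_exists range range_subspace isometry_range_closed y) as [l [Rl Ol]].
  set (w := hsub y l).
  assert (O : re_inner w (W w) = 0).
  { unfold re_inner, w. rewrite (Ol (W (hsub y l)) (ex_intro _ _ eq_refl)). reflexivity. }
  assert (Hw : w = hzero).
  { apply hnorm_eq0.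
    assert (E : hnorm w * hnorm w = re_inner w (hsub w (W w))).
    { rewrite hnorm_sq, hnorm2_re_inner, re_inner_subr, O. ring. }
    pose proof (cauchy_schwarz_re_norm w (hsub w (W w))). pose proof (Rle_abs (re_inner w (hsub w (W w)))).
    pose proof (DW w) as Dw. rewrite hnorm_sub_sym in Dw.
    pose proof (hnorm_ge0 w).
    assert (hnorm w * hnorm (hsub w (W w)) <= hnorm w * (k * hnorm w)) by (apply Rmult_le_compat_l; auto).
    assert ((1 - k) * (hnorm w * hnorm w) <= 0) by lra.
    apply Rsqr_0_uniq. unfold Rsqr. nra. }
  destruct Rl as [x Hx]. exists x. rewrite Hx. symmetry. apply hsub_eq0. exact Hw.
Qed.

End Isom.

(** * The Hilbert space [l^2(N, H)] *)

Lemma ex_series_Rabs_le (a b : nat -> R) : (forall n, Rabs (a n) <= b n) -> ex_series b -> ex_series a.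
Proof. intros Hab Hb. apply (ex_series_le a b); auto. Qed.

Lemma ex_series_Rplus (a b : nat -> R) : ex_series a -> ex_series b -> ex_series (fun n => a n + b n).
Proof. intros Ha Hb. exact (ex_series_plus a b Ha Hb). Qed.

Lemma ex_series_Rscal (c : R) (a : nat -> R) : ex_series a -> ex_series (fun n => c * a n).
Proof. intros Ha. exact (ex_series_scal_l c a Ha). Qed.


Lemma partial_sums_incr (a : nat -> R) : (forall n, 0 <= a n) -> forall n, sum_f_R0 a n <= sum_f_R0 a (S n).
Proof. intros Ha n. simpl. specialize (Ha (S n)). lra. Qed.

Lemma partial_sum_le_Series (a : nat -> R) : (forall n, 0 <= a n) -> ex_series a ->
  forall N, sum_f_R0 a N <= Series a.
Proof.
  intros Ha Hs N. pose proof (Series_correct a Hs) as C.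
  apply is_series_Reals in C. unfold infinite_sum in C.
  assert (Un_cv (sum_f_R0 a) (Series a)) by exact C.
  apply is_lim_seq_Reals in H.
  apply (is_lim_seq_incr_compare (sum_f_R0 a) (Series a) H (partial_sums_incr a Ha)).
Qed.

Lemma term_le_Series (a : nat -> R) : (forall n, 0 <= a n) -> ex_series a -> forall n, a n <= Series a.
Proof.
  intros Ha Hs n. eapply Rle_trans; [|apply (partial_sum_le_Series a Ha Hs n)].
  destruct n; simpl; [lra|]. pose proof (cond_pos_sum a n (fun k => Ha k)). lra.
Qed.

Lemma Series_nonneg (a : nat -> R) : (forall n, 0 <= a n) -> ex_series a -> 0 <= Series a.
Proof. intros Ha Hs. pose proof (term_le_Series a Ha Hs 0). specialize (Ha 0%nat). lra. Qed.

Lemma Series_of_bounded_partial_sums (a : nat -> R) (B : R) : (forall n, 0 <= a n) -> (forall N, sum_f_R0 a N <= B) ->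
  ex_series a /\ Series a <= B.
Proof.
  intros Ha Hb.
  destruct (ex_finite_lim_seq_incr (sum_f_R0 a) B (partial_sums_incr a Ha) Hb) as [l Hl].
  assert (is_series a l).
  { apply is_series_Reals. apply is_lim_seq_Reals in Hl. exact Hl. }
  split; [exists l; auto|]. rewrite (is_series_unique a l H).
  pose proof (is_lim_seq_le (sum_f_R0 a) (fun _ => B) l B Hb Hl (is_lim_seq_const B)). simpl in H0. exact H0.
Qed.

Lemma Series_eq0_terms (a : nat -> R) : (forall n, 0 <= a n) -> ex_series a -> Series a = 0 -> forall n, a n = 0.
Proof. intros Ha Hs H0 n. pose proof (term_le_Series a Ha Hs n). specialize (Ha n). lra. Qed.

Lemma ex_series_shift (a : nat -> R) : ex_series a -> ex_series (fun k => a (S k)).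
Proof. intros Ha. apply (proj1 (ex_series_incr_1 a)). exact Ha. Qed.

Lemma Series_shift_le (a : nat -> R) : (forall n, 0 <= a n) -> ex_series a -> Series (fun k => a (S k)) <= Series a.
Proof. intros Ha Hs. rewrite (Series_incr_1 a Hs). specialize (Ha 0%nat). lra. Qed.

Lemma sqrt_lt_sq (x eps : R) : 0 <= x -> sqrt x < eps -> x < eps * eps.
Proof.
  intros Hx Hs. pose proof (sqrt_pos x). rewrite <- (sqrt_sqrt x Hx).
  apply Rmult_le_0_lt_compat; lra.
Qed.

Lemma sqrt_le_sq (x a : R) : 0 <= a -> x <= a * a -> sqrt x <= a.
Proof.
  intros Ha Hx. rewrite <- (sqrt_square a Ha). apply sqrt_le_1_alt. exact Hx.
Qed.

Section L2.
Context {X : HilbertSpace}.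

Lemma hnorm2_add_le (a b : X) : hnorm2 (hadd a b) <= 2 * hnorm2 a + 2 * hnorm2 b.
Proof. pose proof (parallelogram a b). pose proof (hnorm2_ge0 (hsub a b)). lra. Qed.

Lemma abs_re_inner_le (a b : X) : Rabs (re_inner a b) <= / 2 * (hnorm2 a + hnorm2 b).
Proof.
  eapply Rle_trans; [apply cauchy_schwarz_re_norm|]. rewrite <- !hnorm_sq.
  pose proof (Rle_0_sqr (hnorm a - hnorm b)). unfold Rsqr in H. lra.
Qed.
Lemma abs_im_inner_le (a b : X) : Rabs (im_inner a b) <= / 2 * (hnorm2 a + hnorm2 b).
Proof.
  eapply Rle_trans; [apply cauchy_schwarz_im_norm|]. rewrite <- !hnorm_sq.
  pose proof (Rle_0_sqr (hnorm a - hnorm b)). unfold Rsqr in H. lra.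
Qed.

Definition square_summable (u : nat -> X) := ex_series (fun n => hnorm2 (u n)).
Definition l2seq := {u : nat -> X | square_summable u}.

Definition coord (u : l2seq) : nat -> X := proj1_sig u.

Lemma l2_eq (u v : l2seq) : (forall n, coord u n = coord v n) -> u = v.
Proof.
  destruct u as [u pu], v as [v pv]. unfold coord; simpl. intros E.
  assert (u = v) by (apply functional_extensionality; exact E). subst v.
  f_equal. apply proof_irrelevance.
Qed.

Lemma ex_series_const0 : ex_series (fun _ : nat => 0).
Proof.
  apply (Series_of_bounded_partial_sums (fun _ => 0) 0); [intros; lra|]. intros N. rewrite sum_cte. lra.
Qed.

Lemma square_summable_add u v : square_summable u -> square_summable v -> square_summable (fun n => hadd (u n) (v n)).
Proof.
  intros Hu Hv. unfold square_summable. apply (ex_series_Rabs_le _ (fun n => 2 * hnorm2 (u n) + 2 * hnorm2 (v n))).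
  - intros n. rewrite Rabs_pos_eq by apply hnorm2_ge0. apply hnorm2_add_le.
  - apply ex_series_Rplus; apply ex_series_Rscal; auto.
Qed.

Lemma square_summable_zero : square_summable (fun _ => hzero).
Proof. unfold square_summable. apply (ex_series_ext (fun _ => 0)); [intros; rewrite hnorm2_zero; reflexivity|apply ex_series_const0]. Qed.

Lemma square_summable_opp u : square_summable u -> square_summable (fun n => hopp (u n)).
Proof. intros Hu. unfold square_summable. apply (ex_series_ext (fun n => hnorm2 (u n))); auto. intros n; rewrite hnorm2_opp; auto. Qed.

Lemma square_summable_scal a u : square_summable u -> square_summable (fun n => hscal a (u n)).
Proof.
  intros Hu. unfold square_summable. apply (ex_series_ext (fun n => (cre a * cre a + cim a * cim a) * hnorm2 (u n))).
  - intros n; rewrite hnorm2_scal; auto.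
  - apply ex_series_Rscal; auto.
Qed.

Definition l2add (u v : l2seq) : l2seq := exist _ _ (square_summable_add _ _ (proj2_sig u) (proj2_sig v)).
Definition l2zero : l2seq := exist _ _ square_summable_zero.
Definition l2opp (u : l2seq) : l2seq := exist _ _ (square_summable_opp _ (proj2_sig u)).
Definition l2scal (a : Cx) (u : l2seq) : l2seq := exist _ _ (square_summable_scal a _ (proj2_sig u)).
Definition l2inner (u v : l2seq) : Cx :=
  mkCx (Series (fun n => re_inner (coord u n) (coord v n))) (Series (fun n => im_inner (coord u n) (coord v n))).

Lemma ex_re_inner (u v : l2seq) : ex_series (fun n => re_inner (coord u n) (coord v n)).
Proof.
  apply (ex_series_Rabs_le _ (fun n => / 2 * (hnorm2 (coord u n) + hnorm2 (coord v n)))).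
  - intros n; apply abs_re_inner_le.
  - apply ex_series_Rscal, ex_series_Rplus; [apply (proj2_sig u)|apply (proj2_sig v)].
Qed.
Lemma ex_im_inner (u v : l2seq) : ex_series (fun n => im_inner (coord u n) (coord v n)).
Proof.
  apply (ex_series_Rabs_le _ (fun n => / 2 * (hnorm2 (coord u n) + hnorm2 (coord v n)))).
  - intros n; apply abs_im_inner_le.
  - apply ex_series_Rscal, ex_series_Rplus; [apply (proj2_sig u)|apply (proj2_sig v)].
Qed.

Lemma ex_hnorm2 (u : l2seq) : ex_series (fun n => hnorm2 (coord u n)).
Proof. apply (proj2_sig u). Qed.

Lemma l2_add_assoc x y z : l2add x (l2add y z) = l2add (l2add x y) z.
Proof. apply l2_eq; intros n; simpl. apply hadd_assoc. Qed.
Lemma l2_add_comm x y : l2add x y = l2add y x.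
Proof. apply l2_eq; intros n; simpl. apply hadd_comm. Qed.
Lemma l2_add_0 x : l2add x l2zero = x.
Proof. apply l2_eq; intros n; simpl. apply hadd_0. Qed.
Lemma l2_add_opp x : l2add x (l2opp x) = l2zero.
Proof. apply l2_eq; intros n; simpl. apply hadd_opp. Qed.
Lemma l2_scal_1 x : l2scal Defs.C1 x = x.
Proof. apply l2_eq; intros n; simpl. apply hscal_1. Qed.
Lemma l2_scal_assoc a b x : l2scal a (l2scal b x) = l2scal (Cmul a b) x.
Proof. apply l2_eq; intros n; simpl. apply hscal_assoc. Qed.
Lemma l2_scal_addv a x y : l2scal a (l2add x y) = l2add (l2scal a x) (l2scal a y).
Proof. apply l2_eq; intros n; simpl. apply hscal_addv. Qed.
Lemma l2_scal_adds a b x : l2scal (Cadd a b) x = l2add (l2scal a x) (l2scal b x).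
Proof. apply l2_eq; intros n; simpl. apply hscal_adds. Qed.

Lemma l2_inner_addl x y z : l2inner (l2add x y) z = Cadd (l2inner x z) (l2inner y z).
Proof.
  unfold l2inner, Cadd; simpl. f_equal.
  - rewrite <- Series_plus by apply ex_re_inner. apply Series_ext. intros n. apply re_inner_addl.
  - rewrite <- Series_plus by apply ex_im_inner. apply Series_ext. intros n. apply im_inner_addl.
Qed.

Lemma l2_inner_scall a x y : l2inner (l2scal a x) y = Cmul a (l2inner x y).
Proof.
  unfold l2inner, Cmul; simpl. f_equal.
  - rewrite <- !Series_scal_l, <- Series_minus by (apply ex_series_Rscal; first [apply ex_re_inner|apply ex_im_inner]).
    apply Series_ext. intros n. apply re_inner_scall.
  - rewrite <- !Series_scal_l, <- Series_plus by (apply ex_series_Rscal; first [apply ex_re_inner|apply ex_im_inner]).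
    apply Series_ext. intros n. apply im_inner_scall.
Qed.

Lemma l2_inner_conj x y : l2inner y x = Cconj (l2inner x y).
Proof.
  unfold l2inner, Cconj; simpl. f_equal.
  - apply Series_ext. intros n. apply re_inner_sym.
  - rewrite <- Series_opp. apply Series_ext. intros n. apply im_inner_sym.
Qed.

Lemma l2_inner_pos x : 0 <= cre (l2inner x x).
Proof. simpl. apply Series_nonneg; [intros; apply hnorm2_ge0|apply ex_hnorm2]. Qed.

Lemma l2_inner_def x : l2inner x x = Defs.C0 -> x = l2zero.
Proof.
  intros E. apply (f_equal cre) in E. simpl in E.
  apply l2_eq. intros n. simpl. apply hnorm2_eq0.
  apply (Series_eq0_terms (fun n => hnorm2 (coord x n))); auto; [intros; apply hnorm2_ge0|apply ex_hnorm2].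
Qed.

Definition l2_hnorm2 (w : l2seq) := Series (fun k => hnorm2 (coord w k)).

Lemma coord_hnorm2_le (w : l2seq) k : hnorm2 (coord w k) <= l2_hnorm2 w.
Proof. apply (term_le_Series (fun k => hnorm2 (coord w k))); [intros; apply hnorm2_ge0|apply ex_hnorm2]. Qed.

Lemma finitely_many_uniform (f : nat -> nat -> X) (l : nat -> X) :
  (forall k, hconverges (fun j => f j k) (l k)) ->
  forall d, d > 0 -> forall M, exists J, forall j, (J <= j)%nat -> forall k, (k <= M)%nat -> hnorm (hsub (f j k) (l k)) < d.
Proof.
  intros Hc d Hd M. induction M.
  - destruct (Hc 0%nat d Hd) as [J HJ]. exists J. intros j Hj k Hk. replace k with 0%nat by lia. auto.
  - destruct IHM as [J1 H1]. destruct (Hc (S M) d Hd) as [J2 H2]. exists (J1 + J2)%nat.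
    intros j Hj k Hk. destruct (Nat.eq_dec k (S M)).
    + subst. apply H2. lia.
    + apply H1; lia.
Qed.

Section L2Complete.
Variable u : nat -> l2seq.
Hypothesis Cy : forall eps, eps > 0 -> exists N, forall m n, (N <= m)%nat -> (N <= n)%nat ->
  sqrt (l2_hnorm2 (l2add (u m) (l2opp (u n)))) < eps.

Let U m k := coord (u m) k.

Lemma coord_cauchy k : hcauchy (fun m => U m k).
Proof.
  intros eps He. destruct (Cy eps He) as [N HN]. exists N. intros m n Hm Hn.
  eapply Rle_lt_trans; [|exact (HN m n Hm Hn)].
  unfold hnorm. apply sqrt_le_1_alt. exact (coord_hnorm2_le (l2add (u m) (l2opp (u n))) k).
Qed.

Variable l : nat -> X.
Hypothesis Hl : forall k, hconverges (fun m => U m k) (l k).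

(* Each partial sum of [|u m - l|^2] only involves finitely many coordinates,
   which are approximated uniformly by a late enough [u j]. *)
Lemma partial_sums_dist_small eps : eps > 0 -> exists N, forall m, (N <= m)%nat -> forall M,
  sum_f_R0 (fun k => hnorm2 (hsub (U m k) (l k))) M <= 4 * (eps * eps).
Proof.
  intros He. destruct (Cy eps He) as [N HN]. exists N. intros m Hm M.
  destruct (finitely_many_uniform U l Hl (eps / (INR M + 1))) with (M := M) as [J HJ].
  { apply Rdiv_lt_0_compat; [lra|pose proof (pos_INR M); lra]. }
  set (j := (N + J)%nat).
  specialize (HN m j Hm ltac:(unfold j; lia)).
  apply sqrt_lt_sq in HN; [|apply Series_nonneg; [intros; apply hnorm2_ge0|apply ex_hnorm2]].
  eapply Rle_trans.
  { apply (sum_Rle _ (fun k => 2 * hnorm2 (hsub (U m k) (U j k)) + 2 * (eps / (INR M + 1) * (eps / (INR M + 1))))).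
    intros k Hk. rewrite (hsub_sub_sub (U m k) (U j k) (l k)).
    eapply Rle_trans; [apply hnorm2_add_le|]. apply Rplus_le_compat_l. apply Rmult_le_compat_l; [lra|].
    specialize (HJ j ltac:(unfold j; lia) k Hk). rewrite <- hnorm_sq.
    pose proof (hnorm_ge0 (hsub (U j k) (l k))). apply Rmult_le_compat; lra. }
  rewrite plus_sum, sum_cte.
  assert (S1 : sum_f_R0 (fun k => 2 * hnorm2 (hsub (U m k) (U j k))) M <= 2 * l2_hnorm2 (l2add (u m) (l2opp (u j)))).
  { rewrite (sum_eq _ (fun k => hnorm2 (hsub (U m k) (U j k)) * 2)) by (intros; ring).
    rewrite <- scal_sum. apply Rmult_le_compat_l; [lra|].
    apply (partial_sum_le_Series (fun k => hnorm2 (coord (l2add (u m) (l2opp (u j))) k)));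
      [intros; apply hnorm2_ge0|apply ex_hnorm2]. }
  assert (S2 : 2 * (eps / (INR M + 1) * (eps / (INR M + 1))) * INR (S M) <= 2 * (eps * eps)).
  { rewrite S_INR. pose proof (pos_INR M).
    replace (2 * (eps / (INR M + 1) * (eps / (INR M + 1))) * (INR M + 1)) with (2 * (eps * eps) / (INR M + 1)) by (field; lra).
    apply (Rmult_le_reg_r (INR M + 1)); [lra|]. unfold Rdiv. rewrite Rmult_assoc, Rinv_l, Rmult_1_r by lra.
    assert (0 <= eps * eps) by nra. nra. }
  lra.
Qed.

Lemma coord_limit_square_summable : square_summable l.
Proof.
  destruct (partial_sums_dist_small 1 ltac:(lra)) as [N HN].
  destruct (Series_of_bounded_partial_sums (fun k => hnorm2 (hsub (U N k) (l k))) (4 * (1 * 1))) as [Ex _].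
  { intros; apply hnorm2_ge0. }
  { apply HN. lia. }
  unfold square_summable. apply (ex_series_Rabs_le _ (fun k => 2 * hnorm2 (U N k) + 2 * hnorm2 (hsub (U N k) (l k)))).
  - intros k. rewrite Rabs_pos_eq by apply hnorm2_ge0.
    replace (l k) with (hadd (U N k) (hopp (hsub (U N k) (l k)))) at 1 by vector_eq.
    eapply Rle_trans; [apply hnorm2_add_le|]. rewrite hnorm2_opp. lra.
  - apply ex_series_Rplus; apply ex_series_Rscal; auto. apply (proj2_sig (u N)).
Qed.

Lemma l2_converges_to_coord_limit : forall eps, eps > 0 -> exists N, forall n, (N <= n)%nat ->
  sqrt (l2_hnorm2 (l2add (u n) (l2opp (exist _ l coord_limit_square_summable)))) < eps.
Proof.
  intros eps He. destruct (partial_sums_dist_small (eps / 3)) as [N HN]; [lra|]. exists N. intros n Hn.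
  destruct (Series_of_bounded_partial_sums (fun k => hnorm2 (hsub (U n k) (l k))) (4 * (eps / 3 * (eps / 3)))) as [_ Hs].
  { intros; apply hnorm2_ge0. }
  { apply HN; auto. }
  eapply Rle_lt_trans; [apply (sqrt_le_sq _ (2 * (eps / 3))); [lra|]|lra].
  replace (2 * (eps / 3) * (2 * (eps / 3))) with (4 * (eps / 3 * (eps / 3))) by ring. exact Hs.
Qed.

End L2Complete.

Lemma l2_complete (u : nat -> l2seq) :
  (forall eps, eps > 0 -> exists N, forall m n, (N <= m)%nat -> (N <= n)%nat ->
     sqrt (cre (l2inner (l2add (u m) (l2opp (u n))) (l2add (u m) (l2opp (u n))))) < eps) ->
  exists l, forall eps, eps > 0 -> exists N, forall n, (N <= n)%nat ->
     sqrt (cre (l2inner (l2add (u n) (l2opp l)) (l2add (u n) (l2opp l)))) < eps.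
Proof.
  intros Cy.
  destruct (choice_nat (fun k x => hconverges (fun m => coord (u m) k) x)) as [l Hl].
  { intros k. apply hcauchy_converges, (coord_cauchy u Cy). }
  eexists. exact (l2_converges_to_coord_limit u Cy l Hl).
Qed.

Definition l2space : HilbertSpace :=
  Build_HilbertSpace l2seq l2add l2zero l2opp l2scal l2inner
    l2_add_assoc l2_add_comm l2_add_0 l2_add_opp l2_scal_1 l2_scal_assoc l2_scal_addv l2_scal_adds
    l2_inner_addl l2_inner_scall l2_inner_conj l2_inner_pos l2_inner_def l2_complete.

End L2.

(** * The unitary part of a near-identity intertwiner *)

Section Polar.
Context {G : Group} {H : HilbertSpace}.
Variables (pi om : G -> H -> H).
Hypotheses (Hpi : unitary_rep pi) (Hom : unitary_rep om).
Variables (t : R) (T : H -> H).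
Hypotheses (Ht0 : 0 <= t) (Ht1 : t <= 1/64) (LT : is_linear T) (BT : opnorm_le T t)
  (Hrel : forall g y, hsub (pi g y) (om g y) = hsub (pi g (T y)) (T (om g y))).

(* [A = 1 - T] intertwines [om] with [pi]; [B = A^* A = 1 + E] with [E] small, and the unitary
   part of [A] is [W = A Y] with [Y = 1 + Z = B^(-1/2)]. *)
Definition Aop (x : H) : H := hsub x (T x).

Lemma A_linear : is_linear Aop.
Proof.
  unfold Aop; split; intros.
  - rewrite (lin_add T LT). vector_eq.
  - rewrite (lin_scal T LT). vector_eq.
Qed.

Lemma A_bounded : opnorm_le Aop (1 + t).
Proof. intros x. unfold Aop. eapply Rle_trans; [apply hnorm_sub_le|]. pose proof (BT x). lra. Qed.

Lemma A_intertwines g y : pi g (Aop y) = Aop (om g y).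
Proof.
  unfold Aop. rewrite (lin_sub _ (rep_lin pi Hpi g)). apply eq_by_re_inner; intro z.
  pose proof (f_equal (fun v => re_inner v z) (Hrel g y)). simpl in H0.
  rewrite !re_inner_subl in *. lra.
Qed.

Lemma B_exists x : exists z, forall y, hinner (Aop y) (Aop x) = hinner y z.
Proof.
  apply (riesz_representation (fun y => hinner (Aop y) (Aop x)) ((1 + t) * ((1 + t) * hnorm x))).
  - intros a b. rewrite (lin_add _ A_linear). apply hinner_addl.
  - intros a y. rewrite (lin_scal _ A_linear). apply hinner_scall.
  - intros y. fold (re_inner (Aop y) (Aop x)). eapply Rle_trans; [apply cauchy_schwarz_re_norm|].
    pose proof (A_bounded y). pose proof (A_bounded x). pose proof (hnorm_ge0 (Aop y)). pose proof (hnorm_ge0 (Aop x)).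
    pose proof (hnorm_ge0 x). pose proof (hnorm_ge0 y).
    assert (hnorm (Aop y) * hnorm (Aop x) <= ((1 + t) * hnorm y) * hnorm (Aop x)) by (apply Rmult_le_compat_r; auto).
    assert (((1 + t) * hnorm y) * hnorm (Aop x) <= ((1 + t) * hnorm y) * ((1 + t) * hnorm x)) by (apply Rmult_le_compat_l; nra).
    nra.
Qed.

Definition Bop (x : H) : H := proj1_sig (constructive_indefinite_description _ (B_exists x)).

Lemma B_adjoint x y : hinner (Aop y) (Aop x) = hinner y (Bop x).
Proof. unfold Bop. exact (proj2_sig (constructive_indefinite_description _ (B_exists x)) y). Qed.
Lemma B_adjoint_re x y : re_inner y (Bop x) = re_inner (Aop y) (Aop x).
Proof. unfold re_inner. rewrite B_adjoint. reflexivity. Qed.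
Lemma B_adjoint_im x y : im_inner y (Bop x) = im_inner (Aop y) (Aop x).
Proof. unfold im_inner. rewrite B_adjoint. reflexivity. Qed.

Lemma B_linear : is_linear Bop.
Proof.
  split; intros.
  - apply eq_by_re_inner_r; intro z. rewrite re_inner_addr, !B_adjoint_re, (lin_add _ A_linear), re_inner_addr. reflexivity.
  - apply eq_by_re_inner_r; intro z. rewrite re_inner_scalr, !B_adjoint_re, B_adjoint_im, (lin_scal _ A_linear), re_inner_scalr. reflexivity.
Qed.

Lemma B_selfadjoint : selfadjoint Bop.
Proof.
  intros u v. rewrite (hinner_conj v (Bop u)), <- B_adjoint, <- hinner_conj, B_adjoint. reflexivity.
Qed.

Lemma B_commute g x : Bop (om g x) = om g (Bop x).
Proof.
  apply eq_by_re_inner_r; intro z.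
  rewrite B_adjoint_re, <- A_intertwines, (rep_re_inner_move pi Hpi).
  rewrite A_intertwines, <- B_adjoint_re.
  rewrite <- (unitary_re_inner _ (rep_unit om Hom g)), rep_inv_r; [reflexivity|exact Hom].
Qed.

Definition Eop (x : H) : H := hsub (Bop x) x.

Lemma E_linear : is_linear Eop.
Proof.
  unfold Eop; split; intros.
  - rewrite (lin_add _ B_linear). vector_eq.
  - rewrite (lin_scal _ B_linear). vector_eq.
Qed.

Lemma E_selfadjoint : selfadjoint Eop.
Proof.
  intros u v. unfold Eop. apply Cx_eq.
  - fold (re_inner (hsub (Bop u) u) v) (re_inner u (hsub (Bop v) v)). rewrite re_inner_subl, re_inner_subr.
    unfold re_inner. rewrite B_selfadjoint. ring.
  - fold (im_inner (hsub (Bop u) u) v) (im_inner u (hsub (Bop v) v)). rewrite im_inner_subl, im_inner_subr.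
    unfold im_inner. rewrite B_selfadjoint. ring.
Qed.

Lemma E_commute g : commute Eop (om g).
Proof.
  intros x. unfold Eop. rewrite B_commute, (lin_sub _ (rep_lin om Hom g)). reflexivity.
Qed.

Definition eps_E := 2 * t + t * t.

Lemma eps_E_ge0 : 0 <= eps_E.
Proof. unfold eps_E. nra. Qed.
Lemma eps_E_le : eps_E <= 1/16.
Proof. unfold eps_E. nra. Qed.

Lemma E_bounded : opnorm_le Eop eps_E.
Proof.
  intros x. apply norm_le_by_re_inner.
  { pose proof eps_E_ge0. pose proof (hnorm_ge0 x). nra. }
  intros y. rewrite re_inner_sym. unfold Eop. rewrite re_inner_subr, B_adjoint_re. unfold Aop.
  rewrite !re_inner_subl, !re_inner_subr.
  pose proof (cauchy_schwarz_re_norm y (T x)). pose proof (cauchy_schwarz_re_norm (T y) x). pose proof (cauchy_schwarz_re_norm (T y) (T x)).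
  pose proof (Rle_abs (re_inner (T y) (T x))).
  pose proof (Rle_abs (- re_inner y (T x))) as Q1. pose proof (Rle_abs (- re_inner (T y) x)) as Q2. rewrite Rabs_Ropp in Q1, Q2.
  pose proof (BT x) as H5. pose proof (BT y) as H6. pose proof (hnorm_ge0 x). pose proof (hnorm_ge0 y).
  pose proof (hnorm_ge0 (T x)). pose proof (hnorm_ge0 (T y)).
  assert (A1 : hnorm y * hnorm (T x) <= t * (hnorm x * hnorm y)).
  { eapply Rle_trans; [apply Rmult_le_compat_l; [auto|apply H5]|]. right; ring. }
  assert (A2 : hnorm (T y) * hnorm x <= t * (hnorm x * hnorm y)).
  { eapply Rle_trans; [apply Rmult_le_compat_r; [auto|apply H6]|]. right; ring. }
  assert (A3 : hnorm (T y) * hnorm (T x) <= t * t * (hnorm x * hnorm y)).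
  { eapply Rle_trans; [apply Rmult_le_compat; [auto|auto|apply H6|apply H5]|]. right; ring. }
  replace (eps_E * hnorm x * hnorm y) with (2 * (t * (hnorm x * hnorm y)) + t * t * (hnorm x * hnorm y)) by (unfold eps_E; ring).
  lra.
Qed.

Definition eps_Z := 2 * eps_E.

(* For [Z] commuting with [E], [(1 + Z)^2 (1 + E) = 1] rearranges to [Z = sqrt_step Z];
   [sqrt_step] contracts by a factor [1/4] on admissible operators. *)
Definition sqrt_step (Z : H -> H) (x : H) : H :=
  hscal (Creal (- / 2)) (hadd (hadd (Eop x) (Z (Z x))) (hadd (hscal (Creal 2) (Z (Eop x))) (Z (Z (Eop x))))).

Definition admissible (Z : H -> H) :=
  is_linear Z /\ opnorm_le Z eps_Z /\ commute Z Eop /\ (forall g, commute Z (om g)) /\ selfadjoint Z.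

Lemma sqrt_step_commute (Z V : H -> H) : is_linear V -> is_linear Z ->
  (forall x, Z (V x) = V (Z x)) -> (forall x, Eop (V x) = V (Eop x)) -> commute (sqrt_step Z) V.
Proof.
  intros LV LZ CZ CE x. unfold sqrt_step.
  rewrite CE, !CZ.
  rewrite ?(lin_scal V LV), ?(lin_add V LV), ?(lin_scal V LV), ?(lin_add V LV). reflexivity.
Qed.

Lemma sqrt_step_admissible (Z : H -> H) : admissible Z -> admissible (sqrt_step Z).
Proof.
  intros [LZ [BZ [CZE [CZO SZ]]]].
  pose proof eps_E_ge0 as e0. pose proof eps_E_le as e1.
  assert (r0 : 0 <= eps_Z) by (unfold eps_Z; lra).
  split; [|split; [|split; [|split]]].
  - unfold sqrt_step. apply lin_rscal. apply lin_plus; apply lin_plus.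
    + exact E_linear.
    + apply lin_comp; auto.
    + apply lin_rscal. apply lin_comp; auto. exact E_linear.
    + apply lin_comp; auto. apply lin_comp; auto. exact E_linear.
  - assert (Bs : opnorm_le (sqrt_step Z) (Rabs (- / 2) * ((eps_E + eps_Z * eps_Z) + (Rabs 2 * (eps_Z * eps_E) + eps_Z * (eps_Z * eps_E))))).
    { unfold sqrt_step; apply opnorm_le_rscal; apply opnorm_le_plus; apply opnorm_le_plus.
      - exact E_bounded.
      - exact (opnorm_le_comp Z Z eps_Z eps_Z r0 BZ BZ).
      - apply opnorm_le_rscal. exact (opnorm_le_comp Z Eop eps_Z eps_E r0 BZ E_bounded).
      - apply (opnorm_le_comp Z (fun x => Z (Eop x)) eps_Z (eps_Z * eps_E) r0 BZ). exact (opnorm_le_comp Z Eop eps_Z eps_E r0 BZ E_bounded). }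
    eapply opnorm_le_mono; [|exact Bs].
    rewrite (Rabs_pos_eq 2) by lra. rewrite Rabs_left by lra.
    unfold eps_Z. nra.
  - apply sqrt_step_commute; auto; try exact E_linear; intros; reflexivity.
  - intros g. apply sqrt_step_commute; [apply (rep_lin om Hom)|auto|apply CZO|apply E_commute].
  - unfold sqrt_step. apply selfadjoint_rscal. apply selfadjoint_plus; apply selfadjoint_plus.
    + exact E_selfadjoint.
    + apply selfadjoint_comp; auto. intros x; reflexivity.
    + apply selfadjoint_rscal. apply selfadjoint_comp; auto. exact E_selfadjoint.
    + apply selfadjoint_comp; auto. apply selfadjoint_comp; auto. exact E_selfadjoint.
      intros x. rewrite CZE. reflexivity.
Qed.

Lemma sqrt_step_contraction (Z1 Z2 : H -> H) d : is_linear Z1 -> is_linear Z2 -> opnorm_le Z1 eps_Z -> opnorm_le Z2 eps_Z -> 0 <= d ->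
  opdist_le Z1 Z2 d -> opdist_le (sqrt_step Z1) (sqrt_step Z2) ((eps_Z + eps_E + eps_Z * eps_E) * d).
Proof.
  intros L1 L2 B1 B2 d0 D x.
  pose proof eps_E_ge0 as e0. pose proof eps_E_le as e1.
  assert (r0 : 0 <= eps_Z) by (unfold eps_Z; lra).
  assert (hsub (sqrt_step Z1 x) (sqrt_step Z2 x) = hscal (Creal (- / 2))
     (hadd (hadd (hsub (Z1 (Z1 x)) (Z2 (Z2 x))) (hscal (Creal 2) (hsub (Z1 (Eop x)) (Z2 (Eop x)))))
           (hsub (Z1 (Z1 (Eop x))) (Z2 (Z2 (Eop x)))))) by (unfold sqrt_step; vector_eq).
  rewrite H0, hnorm_scal_real, Rabs_left by lra.
  pose proof (opdist_le_comp Z1 Z2 Z1 Z2 eps_Z eps_Z d d L1 r0 d0 B1 B2 D D x) as P1.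
  pose proof (opdist_le_comp Z1 Z2 Z1 Z2 eps_Z eps_Z d d L1 r0 d0 B1 B2 D D (Eop x)) as P2.
  pose proof (D (Eop x)) as P3. cbv beta in P1, P2, P3.
  pose proof (hnorm_triangle (hadd (hsub (Z1 (Z1 x)) (Z2 (Z2 x))) (hscal (Creal 2) (hsub (Z1 (Eop x)) (Z2 (Eop x)))))
           (hsub (Z1 (Z1 (Eop x))) (Z2 (Z2 (Eop x))))).
  pose proof (hnorm_triangle (hsub (Z1 (Z1 x)) (Z2 (Z2 x))) (hscal (Creal 2) (hsub (Z1 (Eop x)) (Z2 (Eop x))))).
  rewrite hnorm_scal_real, Rabs_pos_eq in H2 by lra.
  pose proof (E_bounded x). pose proof (hnorm_ge0 x). pose proof (hnorm_ge0 (Eop x)).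
  assert (d * hnorm (Eop x) <= d * (eps_E * hnorm x)) by (apply Rmult_le_compat_l; auto).
  assert ((eps_Z * d + d * eps_Z) * hnorm (Eop x) <= (eps_Z * d + d * eps_Z) * (eps_E * hnorm x)) by (apply Rmult_le_compat_l; nra).
  nra.
Qed.

Fixpoint sqrt_iter (n : nat) : H -> H :=
  match n with
  | O => fun _ => hzero
  | S n => sqrt_step (sqrt_iter n)
  end.

Lemma sqrt_iter_admissible n : admissible (sqrt_iter n).
Proof.
  induction n.
  - simpl. pose proof eps_E_ge0. split; [|split; [|split; [|split]]].
    + split; intros; [rewrite hadd_0|rewrite hscal_zero]; reflexivity.
    + intros x. rewrite hnorm_zero. pose proof (hnorm_ge0 x). unfold eps_Z. nra.
    + intros x. symmetry. apply lin_zero, E_linear.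
    + intros g x. symmetry. apply lin_zero, (rep_lin om Hom).
    + intros u v. rewrite hinner_0l, hinner_0r. reflexivity.
  - simpl. apply sqrt_step_admissible; auto.
Qed.

Lemma sqrt_iter_step n : opdist_le (sqrt_iter (S n)) (sqrt_iter n) (eps_E / 2 * (1/4) ^ n).
Proof.
  pose proof eps_E_ge0 as e0. pose proof eps_E_le as e1.
  induction n.
  - intros x. simpl. unfold sqrt_step.
    replace (hsub (hscal (Creal (- / 2)) (hadd (hadd (Eop x) hzero) (hadd (hscal (Creal 2) hzero) hzero))) hzero)
      with (hscal (Creal (- / 2)) (Eop x)) by vector_eq.
    rewrite hnorm_scal_real, Rabs_left by lra. pose proof (E_bounded x). lra.
  - change (sqrt_iter (S (S n))) with (sqrt_step (sqrt_iter (S n))). change (sqrt_iter (S n)) with (sqrt_step (sqrt_iter n)) at 2.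
    destruct (sqrt_iter_admissible (S n)) as [L1 [B1 _]]. destruct (sqrt_iter_admissible n) as [L2 [B2 _]].
    eapply opnorm_le_mono; [|apply sqrt_step_contraction; auto].
    + simpl. pose proof (pow_le (1/4) n ltac:(lra)).
      assert (0 <= eps_E / 2 * (1/4)^n) by (apply Rmult_le_pos; lra).
      assert (eps_Z + eps_E + eps_Z * eps_E <= 1/4) by (unfold eps_Z; nra).
      set (a := eps_E / 2 * (1/4)^n) in *.
      replace (eps_E / 2 * (1 / 4 * (1 / 4) ^ n)) with (1/4 * a) by (unfold a; ring).
      apply Rmult_le_compat_r; auto.
    + pose proof (pow_le (1/4) n ltac:(lra)). apply Rmult_le_pos; lra.
    + exact IHn.
Qed.

Lemma sqrt_iter_converges x : exists l, forall n, hnorm (hsub (sqrt_iter n x) l) <= (2 * eps_E / 3 * hnorm x) * (1/4) ^ n.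
Proof.
  pose proof eps_E_ge0 as e0.
  destruct (geometric_increments_converge (fun n => sqrt_iter n x) (eps_E / 2 * hnorm x) (1/4)) as [l [_ Hl]].
  - pose proof (hnorm_ge0 x). nra.
  - lra.
  - intros n. pose proof (sqrt_iter_step n x). cbv beta in H0. lra.
  - exists l. intros n. eapply Rle_trans; [apply Hl|]. right. field.
Qed.

Definition sqrt_corr (x : H) : H := proj1_sig (constructive_indefinite_description _ (sqrt_iter_converges x)).

Lemma sqrt_iter_to_corr n : opdist_le (sqrt_iter n) sqrt_corr (2 * eps_E / 3 * (1/4) ^ n).
Proof.
  intros x. pose proof (proj2_sig (constructive_indefinite_description _ (sqrt_iter_converges x)) n). cbv beta.
  fold (sqrt_corr x) in H0. eapply Rle_trans; [apply H0|]. right. ring.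
Qed.

Lemma sqrt_corr_admissible : admissible sqrt_corr.
Proof.
  pose proof eps_E_ge0 as e0.
  assert (K0 : 0 <= 2 * eps_E / 3) by lra.
  assert (Lin : forall n, is_linear (sqrt_iter n)) by (intros n; apply (sqrt_iter_admissible n)).
  assert (LZ : is_linear sqrt_corr) by (apply (quarter_limit_linear sqrt_iter sqrt_corr _ K0 sqrt_iter_to_corr Lin)).
  split; [|split; [|split; [|split]]].
  - exact LZ.
  - apply (quarter_limit_opnorm_le sqrt_iter sqrt_corr _ K0 sqrt_iter_to_corr). intros n; apply (sqrt_iter_admissible n).
  - apply (quarter_limit_commute sqrt_iter sqrt_corr _ K0 sqrt_iter_to_corr Eop eps_E E_linear e0 E_bounded). intros n; apply (sqrt_iter_admissible n).
  - intros g. apply (quarter_limit_commute sqrt_iter sqrt_corr _ K0 sqrt_iter_to_corr (om g) 1 (rep_lin om Hom g) ltac:(lra)).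
    + intros x. rewrite rep_norm by exact Hom. lra.
    + intros n. apply (sqrt_iter_admissible n).
  - apply (quarter_limit_selfadjoint sqrt_iter sqrt_corr _ K0 sqrt_iter_to_corr). intros n; apply (sqrt_iter_admissible n).
Qed.

Lemma sqrt_corr_fixpoint x : sqrt_corr x = sqrt_step sqrt_corr x.
Proof.
  pose proof eps_E_ge0 as e0. pose proof eps_E_le as e1.
  destruct sqrt_corr_admissible as [LZ [BZ _]].
  apply hsub_eq0. apply (vec_eq0_of_quarter_bound _ ((2 * eps_E / 3) * (1 + (eps_Z + eps_E + eps_Z * eps_E)) * hnorm x)).
  { pose proof (hnorm_ge0 x). unfold eps_Z. apply Rmult_le_pos; [|auto]. nra. }
  intros n.
  assert (hsub (sqrt_corr x) (sqrt_step sqrt_corr x) = hadd (hopp (hsub (sqrt_iter (S n) x) (sqrt_corr x))) (hsub (sqrt_step (sqrt_iter n) x) (sqrt_step sqrt_corr x))).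
  { change (sqrt_iter (S n) x) with (sqrt_step (sqrt_iter n) x). vector_eq. }
  rewrite H0. eapply Rle_trans; [apply hnorm_triangle|]. rewrite hnorm_opp.
  pose proof (sqrt_iter_to_corr (S n) x). cbv beta in H1.
  destruct (sqrt_iter_admissible n) as [Ln [Bn _]].
  assert (0 <= 2 * eps_E / 3 * (1 / 4) ^ n) by (pose proof (pow_le (1/4) n ltac:(lra)); nra).
  pose proof (sqrt_step_contraction (sqrt_iter n) sqrt_corr _ Ln LZ Bn BZ H2 (sqrt_iter_to_corr n) x). cbv beta in H3.
  simpl in H1. pose proof (hnorm_ge0 x). pose proof (pow_le (1/4) n ltac:(lra)).
  assert (0 <= eps_Z + eps_E + eps_Z * eps_E) by (unfold eps_Z; nra).
  set (p := (1/4)^n) in *. set (nx := hnorm x) in *.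
  assert (2 * eps_E / 3 * (1 / 4 * p) * nx <= 2 * eps_E / 3 * p * nx).
  { apply Rmult_le_compat_r; auto. nra. }
  set (c := eps_Z + eps_E + eps_Z * eps_E) in *. set (q := 2 * eps_E / 3 * p * nx).
  assert (c * (2 * eps_E / 3 * p) * nx = c * q) by (unfold q; ring).
  replace (2 * eps_E / 3 * (1 + c) * nx * p) with (q + c * q) by (unfold q; ring).
  unfold q in *. change (sqrt_iter (S n) x) with (sqrt_step (sqrt_iter n) x). lra.
Qed.

Definition Yop (x : H) : H := hadd x (sqrt_corr x).
Definition Wop (x : H) : H := Aop (Yop x).

Lemma B_as_E v : Bop v = hadd (Eop v) v.
Proof. unfold Eop. rewrite hsub_add. reflexivity. Qed.

Lemma Y_B_Y y : Yop (Bop (Yop y)) = y.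
Proof.
  destruct sqrt_corr_admissible as [LZ [_ [CZE _]]].
  pose proof (sqrt_corr_fixpoint y) as FP. unfold sqrt_step in FP.
  unfold Yop. rewrite B_as_E. rewrite !(lin_add _ LZ), (lin_add _ E_linear), (lin_add _ LZ).
  rewrite <- (CZE y), CZE, <- (CZE y).
  apply eq_by_re_inner; intro z. pose proof (f_equal (fun v => re_inner v z) FP) as F. cbv beta in F.
  repeat (rewrite ?re_inner_addl, ?re_inner_scall, ?im_inner_addl, ?im_inner_scall in F). simpl in F.
  repeat rewrite re_inner_addl. lra.
Qed.

Lemma W_linear : is_linear Wop.
Proof.
  unfold Wop, Yop. apply lin_comp. exact A_linear. apply lin_plus. apply lin_id. apply sqrt_corr_admissible.
Qed.

Lemma W_inner x y : hinner (Wop x) (Wop y) = hinner x y.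
Proof.
  unfold Wop. rewrite B_adjoint.
  assert (saY : selfadjoint Yop) by (unfold Yop; apply selfadjoint_plus; [apply selfadjoint_id|apply sqrt_corr_admissible]).
  rewrite saY, Y_B_Y. reflexivity.
Qed.

Lemma W_intertwines g x : pi g (Wop x) = Wop (om g x).
Proof.
  unfold Wop. rewrite A_intertwines. f_equal. unfold Yop.
  rewrite (lin_add _ (rep_lin om Hom g)). f_equal. destruct sqrt_corr_admissible as [_ [_ [_ [C _]]]]. symmetry; apply C.
Qed.

Lemma W_near_id : opdist_le Wop (fun x => x) (8 * t).
Proof.
  pose proof eps_E_ge0 as e0. pose proof eps_E_le as e1.
  destruct sqrt_corr_admissible as [LZ [BZ _]].
  intros x. cbv beta. unfold Wop, Aop.
  replace (hsub (hsub (Yop x) (T (Yop x))) x) with (hsub (sqrt_corr x) (T (Yop x))) by (unfold Yop; vector_eq).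
  eapply Rle_trans; [apply hnorm_sub_le|].
  pose proof (BZ x). pose proof (BT (Yop x)). unfold Yop in H1 at 2.
  pose proof (hnorm_triangle x (sqrt_corr x)). pose proof (hnorm_ge0 x).
  assert (t * hnorm (hadd x (sqrt_corr x)) <= t * (hnorm x + eps_Z * hnorm x)) by (apply Rmult_le_compat_l; lra).
  assert (eps_Z <= 4 * t + 2 * t * t) by (unfold eps_Z, eps_E; lra).
  assert (eps_Z * hnorm x <= (4 * t + 2 * t * t) * hnorm x) by (apply Rmult_le_compat_r; auto).
  fold (Yop x) in H1, H2, H4.
  assert (A1 : t * (eps_Z * hnorm x) <= t * ((4 * t + 2 * t * t) * hnorm x)) by (apply Rmult_le_compat_l; auto).
  assert (A2 : (4 * t + 2 * t * t) * (t * hnorm x) <= 1 * (t * hnorm x)) by (apply Rmult_le_compat_r; nra).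
  assert (A3 : 0 <= t * t * t * hnorm x) by (repeat apply Rmult_le_pos; auto).
  assert (A4 : t * (t * hnorm x) <= 1 * (t * hnorm x)) by (apply Rmult_le_compat_r; nra).
  lra.
Qed.

Theorem unitary_intertwiner_near_id : exists W, is_unitary W /\ (forall g x, pi g (W x) = W (om g x)) /\ opdist_le W (fun x => x) (8 * t).
Proof.
  exists Wop. split; [|split].
  - split; [exact W_linear|split; [exact W_inner|]].
    apply (isometry_near_id_surjective Wop W_linear W_inner (8 * t)); [lra|exact W_near_id].
  - exact W_intertwines.
  - exact W_near_id.
Qed.

End Polar.

(** * Scaled defects are uniformly inner *)

Lemma nat_even_or_odd (k : nat) : (exists m, k = (2 * m)%nat) \/ (exists m, k = (2 * m + 1)%nat).
Proof. destruct (Nat.Even_or_Odd k) as [[m Hm]|[m Hm]]; [left|right]; exists m; lia. Qed.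

Lemma even_double m : Nat.even (2 * m) = true.
Proof. apply Nat.even_even. Qed.
Lemma even_succ_double m : Nat.even (S (2 * m)) = false.
Proof. replace (S (2 * m)) with (2 * m + 1)%nat by lia. apply Nat.even_odd. Qed.

Section Singles.
Context {H : HilbertSpace}.
Notation K := (@l2space H).

Lemma coord_add (u v : K) k : coord (hadd u v) k = hadd (coord u k) (coord v k).
Proof. reflexivity. Qed.
Lemma coord_scal a (u : K) k : coord (hscal a u) k = hscal a (coord u k).
Proof. reflexivity. Qed.
Lemma coord_sub (u v : K) k : coord (hsub u v) k = hsub (coord u k) (coord v k).
Proof. reflexivity. Qed.
Lemma l2_hnorm2_Series (u : K) : hnorm2 u = Series (fun k => hnorm2 (coord u k)).
Proof. reflexivity. Qed.

Lemma coord_norm_le (u : K) k : hnorm (coord u k) <= hnorm u.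
Proof.
  unfold hnorm at 2. fold (hnorm2 u). rewrite l2_hnorm2_Series. unfold hnorm. apply sqrt_le_1_alt.
  apply (coord_hnorm2_le u k).
Qed.

Definition single_seq (i : nat) (y : H) (k : nat) : H := if Nat.eq_dec k i then y else hzero.

Lemma single_seq_partial_sums i y N : sum_f_R0 (fun k => hnorm2 (single_seq i y k)) N <= hnorm2 y.
Proof.
  assert (forall N, sum_f_R0 (fun k => hnorm2 (single_seq i y k)) N = if le_dec i N then hnorm2 y else 0).
  { intros M. induction M.
    - simpl. unfold single_seq. destruct (Nat.eq_dec 0 i), (le_dec i 0); try lia; subst; auto. rewrite hnorm2_zero; auto.
    - simpl. rewrite IHM. unfold single_seq. destruct (Nat.eq_dec (S M) i), (le_dec i M), (le_dec i (S M)); try lia;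
        rewrite ?hnorm2_zero; lra. }
  rewrite H0. destruct (le_dec i N); [lra|apply hnorm2_ge0].
Qed.

Lemma single_seq_square_summable i y : square_summable (single_seq i y).
Proof. apply (proj1 (Series_of_bounded_partial_sums _ (hnorm2 y) (fun k => hnorm2_ge0 _) (single_seq_partial_sums i y))). Qed.

Definition single (i : nat) (y : H) : K := exist _ (single_seq i y) (single_seq_square_summable i y).

Lemma single_hnorm2 i y : hnorm2 (single i y) <= hnorm2 y.
Proof. rewrite l2_hnorm2_Series. apply (proj2 (Series_of_bounded_partial_sums _ (hnorm2 y) (fun k => hnorm2_ge0 _) (single_seq_partial_sums i y))). Qed.

Lemma single_norm i y : hnorm (single i y) <= hnorm y.
Proof. unfold hnorm. apply sqrt_le_1_alt. apply single_hnorm2. Qed.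

Lemma single_at i y : coord (single i y) i = y.
Proof. simpl. unfold single_seq. destruct (Nat.eq_dec i i); [reflexivity|lia]. Qed.
Lemma single_off i y k : k <> i -> coord (single i y) k = hzero.
Proof. intros Hk. simpl. unfold single_seq. destruct (Nat.eq_dec k i); [lia|reflexivity]. Qed.

Lemma single_add i x y : single i (hadd x y) = hadd (single i x) (single i y).
Proof. apply l2_eq; intros k; simpl; unfold single_seq; destruct (Nat.eq_dec k i); auto. rewrite hadd_0; reflexivity. Qed.
Lemma single_scal i a x : single i (hscal a x) = hscal a (single i x).
Proof. apply l2_eq; intros k; simpl; unfold single_seq; destruct (Nat.eq_dec k i); auto. rewrite hscal_zero; reflexivity. Qed.

End Singles.

Section Deriv.
Context {G : Group} {H : HilbertSpace}.
Notation K := (@l2space H).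
Variables (pi : G -> H -> H) (Hpi : unitary_rep pi).
Variables (om : nat -> G -> H -> H) (Hom : forall n, unitary_rep (om n)) (c : nat -> R).

Definition defect n g y := hscal (Creal (c n)) (hsub (pi g y) (om n g y)).
Hypothesis HD : forall n g x, hnorm (defect n g x) <= hnorm x.

Lemma defect_linear n g : is_linear (defect n g).
Proof.
  pose proof (rep_lin pi Hpi g) as L1. pose proof (rep_lin (om n) (Hom n) g) as L2.
  unfold defect; split; intros.
  - rewrite (lin_add _ L1), (lin_add _ L2). vector_eq.
  - rewrite (lin_scal _ L1), (lin_scal _ L2). vector_eq.
Qed.

Lemma defect_cocycle n g h y : defect n (gmul g h) y = hadd (pi g (defect n h y)) (defect n g (om n h y)).
Proof.
  destruct Hpi as [[Hm1 _] _]. destruct (Hom n) as [[Hm2 _] _].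
  unfold defect. rewrite Hm1, Hm2, (lin_scal _ (rep_lin pi Hpi g)), (lin_sub _ (rep_lin pi Hpi g)). vector_eq.
Qed.

Lemma defect_one n y : defect n gone y = hzero.
Proof.
  destruct Hpi as [[_ H1] _]. destruct (Hom n) as [[_ H2] _].
  unfold defect. rewrite H1, H2, hsub_diag, hscal_zero. reflexivity.
Qed.

(* Coordinates [2n] and [2n+1] of [l^2(N, H)] carry the block [[pi, defect n], [0, om n]];
   [defect n] is a cocycle, so this is a representation, of norm at most 2 when [|defect n| <= 1]. *)
Definition tri_seq (g : G) (u : nat -> H) (k : nat) : H :=
  if Nat.even k then hadd (pi g (u k)) (defect (Nat.div2 k) g (u (S k))) else om (Nat.div2 k) g (u k).

Lemma hnorm2_le_of_norm (a b : H) : hnorm a <= hnorm b -> hnorm2 a <= hnorm2 b.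
Proof. intros Hab. rewrite <- (hnorm_sq b). apply hnorm_le_iff; auto. apply hnorm_ge0. Qed.

Lemma tri_seq_bound g u k : hnorm2 (tri_seq g u k) <= 2 * hnorm2 (u k) + 2 * hnorm2 (u (S k)).
Proof.
  unfold tri_seq. destruct (Nat.even k).
  - eapply Rle_trans; [apply hnorm2_add_le|].
    rewrite (unitary_hnorm2 _ (rep_unit pi Hpi g)). pose proof (hnorm2_le_of_norm _ _ (HD (Nat.div2 k) g (u (S k)))). lra.
  - rewrite (unitary_hnorm2 _ (rep_unit (om _) (Hom _) g)). pose proof (hnorm2_ge0 (u k)). pose proof (hnorm2_ge0 (u (S k))). lra.
Qed.

Lemma tri_seq_square_summable g (u : K) : square_summable (tri_seq g (coord u)).
Proof.
  unfold square_summable. apply (ex_series_Rabs_le _ (fun k => 2 * hnorm2 (coord u k) + 2 * hnorm2 (coord u (S k)))).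
  - intros k. rewrite Rabs_pos_eq by apply hnorm2_ge0. apply tri_seq_bound.
  - apply ex_series_Rplus; apply ex_series_Rscal; [apply ex_hnorm2|]. apply (ex_series_shift (fun k => hnorm2 (coord u k))). apply ex_hnorm2.
Qed.

Definition tri_rep (g : G) (u : K) : K := exist _ (tri_seq g (coord u)) (tri_seq_square_summable g u).

Lemma tri_rep_hnorm2_le g (u : K) : hnorm2 (tri_rep g u) <= 4 * hnorm2 u.
Proof.
  rewrite !l2_hnorm2_Series. simpl.
  assert (E1 : ex_series (fun k => hnorm2 (coord u k))) by apply ex_hnorm2.
  assert (E2 : ex_series (fun k => hnorm2 (coord u (S k)))) by (apply (ex_series_shift (fun k => hnorm2 (coord u k))); auto).
  eapply Rle_trans; [apply (Series_le _ (fun k => 2 * hnorm2 (coord u k) + 2 * hnorm2 (coord u (S k))))|].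
  - intros k. split; [apply hnorm2_ge0|apply tri_seq_bound].
  - apply ex_series_Rplus; apply ex_series_Rscal; auto.
  - rewrite Series_plus by (apply ex_series_Rscal; auto). rewrite !Series_scal_l.
    pose proof (Series_shift_le (fun k => hnorm2 (coord u k)) (fun k => hnorm2_ge0 _) E1). simpl in H0. lra.
Qed.

Lemma tri_rep_norm_le g (u : K) : hnorm (tri_rep g u) <= 2 * hnorm u.
Proof. apply hnorm_le_iff; [pose proof (hnorm_ge0 u); lra|]. pose proof (tri_rep_hnorm2_le g u). rewrite <- (hnorm_sq u) in H0. lra. Qed.

Lemma tri_rep_linear g : is_linear (tri_rep g).
Proof.
  split; intros; apply l2_eq; intros k; simpl; unfold tri_seq, coord; simpl; destruct (Nat.even k).
  - rewrite (lin_add _ (rep_lin pi Hpi g)), (lin_add _ (defect_linear _ g)). vector_eq.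
  - apply (lin_add _ (rep_lin (om _) (Hom _) g)).
  - rewrite (lin_scal _ (rep_lin pi Hpi g)), (lin_scal _ (defect_linear _ g)), hscal_addv. reflexivity.
  - apply (lin_scal _ (rep_lin (om _) (Hom _) g)).
Qed.

Lemma tri_rep_hom : is_hom tri_rep.
Proof.
  split.
  - intros g h u. apply l2_eq; intros k. unfold tri_rep, tri_seq, coord; cbn [proj1_sig].
    destruct (nat_even_or_odd k) as [[m ->]|[m ->]].
    + rewrite !even_double, even_succ_double, !Nat.div2_double, Nat.div2_succ_double. destruct Hpi as [[Hm1 _] _].
      rewrite Hm1, defect_cocycle, (lin_add _ (rep_lin pi Hpi g)). vector_eq.
    + replace (2 * m + 1)%nat with (S (2 * m)) by lia. rewrite even_succ_double, Nat.div2_succ_double.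
      destruct (Hom m) as [[Hm2 _] _]. apply Hm2.
  - intros u. apply l2_eq; intros k. unfold tri_rep, tri_seq, coord; cbn [proj1_sig].
    destruct (nat_even_or_odd k) as [[m ->]|[m ->]].
    + rewrite even_double, Nat.div2_double, defect_one. destruct Hpi as [[_ H1] _]. rewrite H1, hadd_0. reflexivity.
    + replace (2 * m + 1)%nat with (S (2 * m)) by lia. rewrite even_succ_double, Nat.div2_succ_double.
      destruct (Hom m) as [[_ H2] _]. apply H2.
Qed.

Lemma tri_rep_unif_bounded : unif_bounded_rep tri_rep.
Proof.
  split; [exact tri_rep_hom|split; [exact tri_rep_linear|]]. exists 2. intros g u. apply tri_rep_norm_le.
Qed.

End Deriv.

Section Split.
Context {G : Group} {H : HilbertSpace}.
Notation K := (@l2space H).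
Variables (pi : G -> H -> H) (Hpi : unitary_rep pi).
Variables (om : nat -> G -> H -> H) (Hom : forall n, unitary_rep (om n)) (c : nat -> R).
Hypothesis Hc : forall n, 0 < c n.
Hypothesis HD : forall n g x, hnorm (defect pi om c n g x) <= hnorm x.
Notation rho := (tri_rep pi Hpi om Hom c HD).

Variables (S Sinv : K -> K) (aS aI : R).
Hypotheses (LS : is_linear S) (LI : is_linear Sinv) (aS0 : 0 <= aS) (aI0 : 0 <= aI)
  (BS : opnorm_le S aS) (BI : opnorm_le Sinv aI)
  (SSi : forall x, S (Sinv x) = x) (SiS : forall x, Sinv (S x) = x)
  (Hsig : forall g, is_unitary (fun x => Sinv (rho g (S x)))).

(* Vectors supported on the even coordinates form a [rho]-invariant subspace.  Transporting the
   orthogonal projection onto its preimage under [S] gives a [rho]-equivariant bounded projection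
   [tri_proj] killing it; reading off its [2n] coordinate on the [2n+1] slot shows that
   [defect n] is a coboundary with a witness bounded independently of [n]. *)
Definition even_supported (v : K) := forall k, Nat.even k = false -> coord v k = hzero.
Definition pre_even_supported (z : K) := even_supported (S z).

Lemma pre_even_supported_subspace : hsubspace pre_even_supported.
Proof.
  split; [|split]; unfold pre_even_supported, even_supported.
  - intros k _. rewrite (lin_zero S LS). reflexivity.
  - intros x y Hx Hy k Hk. rewrite (lin_add S LS), coord_add, Hx, Hy by auto. apply hadd_0.
  - intros a x Hx k Hk. rewrite (lin_scal S LS), coord_scal, Hx by auto. apply hscal_zero.
Qed.

Lemma pre_even_supported_closed : hclosed pre_even_supported.
Proof.
  intros u l Hu Hl k Hk. apply hnorm_le0. apply Rle_of_le_add_eps. intros eps He.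
  destruct (Hl (eps / (aS + 1))) as [N HN]; [apply Rdiv_lt_0_compat; lra|].
  specialize (HN N (le_n _)).
  pose proof (coord_norm_le (hsub (S l) (S (u N))) k) as P.
  rewrite coord_sub, (Hu N k Hk), hsub_0r in P.
  rewrite <- (lin_sub S LS) in P. pose proof (BS (hsub l (u N))). rewrite hnorm_sub_sym in HN.
  pose proof (hnorm_ge0 (hsub l (u N))).
  apply (Rmult_lt_compat_l (aS + 1)) in HN; [|lra].
  replace ((aS + 1) * (eps / (aS + 1))) with eps in HN by (field; lra). nra.
Qed.

Definition unitarised (g : G) (z : K) : K := Sinv (rho g (S z)).

Lemma unitarised_rep : unitary_rep unitarised.
Proof.
  split; [|exact Hsig]. split.
  - intros g h x. unfold unitarised. rewrite SSi. f_equal. destruct (tri_rep_hom pi Hpi om Hom c HD) as [Hm _]. apply Hm.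
  - intros x. unfold unitarised. destruct (tri_rep_hom pi Hpi om Hom c HD) as [_ H1]. rewrite H1. apply SiS.
Qed.

Lemma tri_rep_even_supported g v : even_supported v -> even_supported (rho g v).
Proof.
  intros Hv k Hk. unfold tri_rep, coord; cbn [proj1_sig]. unfold tri_seq. rewrite Hk.
  fold (coord v k). rewrite (Hv k Hk). apply lin_zero. apply (rep_lin (om _) (Hom _)).
Qed.

Notation proj := (proj pre_even_supported pre_even_supported_subspace pre_even_supported_closed).

Lemma unitarised_pre_even_supported g z : pre_even_supported z -> pre_even_supported (unitarised g z).
Proof. intros Hz. unfold pre_even_supported, unitarised. rewrite SSi. apply tri_rep_even_supported. exact Hz. Qed.

Lemma proj_unitarised g z : proj (unitarised g z) = unitarised g (proj z).
Proof.
  apply proj_unique.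
  - apply unitarised_pre_even_supported, proj_in.
  - intros m Hm. rewrite <- (lin_sub _ (rep_lin unitarised unitarised_rep g)), rep_adj by exact unitarised_rep.
    apply (proj_orth pre_even_supported pre_even_supported_subspace pre_even_supported_closed z). apply unitarised_pre_even_supported. exact Hm.
Qed.

Definition tri_proj (z : K) : K := S (hsub (Sinv z) (proj (Sinv z))).

Lemma tri_proj_linear : is_linear tri_proj.
Proof.
  pose proof (proj_linear pre_even_supported pre_even_supported_subspace pre_even_supported_closed) as LP.
  unfold tri_proj; split; intros.
  - rewrite (lin_add _ LI), (lin_add _ LP), <- (lin_add _ LS). f_equal. vector_eq.
  - rewrite (lin_scal _ LI), (lin_scal _ LP), <- (lin_scal _ LS). f_equal. vector_eq.
Qed.

Lemma tri_proj_commute g z : tri_proj (rho g z) = rho g (tri_proj z).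
Proof.
  unfold tri_proj.
  assert (E : Sinv (rho g z) = unitarised g (Sinv z)) by (unfold unitarised; rewrite SSi; reflexivity).
  rewrite E, proj_unitarised, <- (lin_sub _ (rep_lin unitarised unitarised_rep g)). unfold unitarised at 1. rewrite SSi. reflexivity.
Qed.

Lemma tri_proj_even_supported f : even_supported f -> tri_proj f = hzero.
Proof.
  intros Hf. unfold tri_proj. rewrite (proj_id_on pre_even_supported pre_even_supported_subspace pre_even_supported_closed).
  - rewrite hsub_diag. apply (lin_zero S LS).
  - unfold pre_even_supported. rewrite SSi. exact Hf.
Qed.

Lemma tri_proj_compl z : even_supported (hsub z (tri_proj z)).
Proof.
  unfold tri_proj. rewrite (lin_sub S LS), SSi.
  replace (hsub z (hsub z (S (proj (Sinv z))))) with (S (proj (Sinv z))) by vector_eq.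
  apply (proj_in pre_even_supported pre_even_supported_subspace pre_even_supported_closed).
Qed.

Lemma tri_proj_bounded : opnorm_le tri_proj (aS * aI).
Proof.
  intros z. unfold tri_proj. eapply Rle_trans; [apply BS|].
  pose proof (proj_compl_norm_le pre_even_supported pre_even_supported_subspace pre_even_supported_closed (Sinv z)). pose proof (BI z).
  rewrite Rmult_assoc. apply Rmult_le_compat_l; auto. lra.
Qed.

Definition witness (n : nat) (y : H) : H := coord (tri_proj (single (2 * n + 1) y)) (2 * n).

Lemma tri_rep_single n g y :
  rho g (single (2 * n + 1) y) = hadd (single (2 * n + 1) (om n g y)) (single (2 * n) (defect pi om c n g y)).
Proof.
  apply l2_eq; intros k. rewrite coord_add.
  change (coord (rho g (single (2 * n + 1) y)) k) with (tri_seq pi om c g (coord (single (2 * n + 1) y)) k).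
  unfold tri_seq. destruct (nat_even_or_odd k) as [[m ->]|[m ->]].
  - rewrite even_double, Nat.div2_double. rewrite !(single_off (2 * n + 1) _ (2 * m)%nat) by lia.
    rewrite (lin_zero _ (rep_lin pi Hpi g)), !hadd_0l.
    destruct (Nat.eq_dec m n) as [->|Hmn].
    + replace (Datatypes.S (2 * n)) with (2 * n + 1)%nat by lia. rewrite !single_at. reflexivity.
    + rewrite (single_off _ _ (Datatypes.S (2 * m))) by lia. rewrite (single_off (2 * n) _ (2 * m)%nat) by lia.
      apply (lin_zero _ (defect_linear pi Hpi om Hom c m g)).
  - replace (2 * m + 1)%nat with (Datatypes.S (2 * m)) by lia. rewrite even_succ_double, Nat.div2_succ_double.
    rewrite (single_off (2 * n) _ (Datatypes.S (2 * m))) by lia. rewrite hadd_0.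
    destruct (Nat.eq_dec m n) as [->|Hmn].
    + replace (Datatypes.S (2 * n)) with (2 * n + 1)%nat by lia. rewrite !single_at. reflexivity.
    + rewrite !(single_off _ _ (Datatypes.S (2 * m))) by lia. apply (lin_zero _ (rep_lin (om m) (Hom m) g)).
Qed.

Lemma witness_cobound n g y : witness n (om n g y) = hadd (pi g (witness n y)) (defect pi om c n g y).
Proof.
  unfold witness.
  pose proof (tri_proj_commute g (single (2 * n + 1) y)) as E.
  rewrite tri_rep_single, (lin_add _ tri_proj_linear), (tri_proj_even_supported (single (2 * n) _)), hadd_0 in E.
  2: { intros k Hk. apply single_off. intros ->. rewrite even_double in Hk. discriminate. }
  rewrite E. unfold tri_rep, coord at 1; cbn [proj1_sig]. unfold tri_seq. rewrite even_double, Nat.div2_double.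
  f_equal. f_equal.
  pose proof (tri_proj_compl (single (2 * n + 1) y) (Datatypes.S (2 * n)) (even_succ_double n)) as C.
  rewrite coord_sub in C. replace (Datatypes.S (2 * n)) with (2 * n + 1)%nat in C by lia.
  rewrite single_at in C. apply hsub_eq0 in C. replace (Datatypes.S (2 * n)) with (2 * n + 1)%nat by lia.
  symmetry. exact C.
Qed.

Lemma witness_linear n : is_linear (witness n).
Proof.
  unfold witness; split; intros.
  - rewrite single_add, (lin_add _ tri_proj_linear). reflexivity.
  - rewrite single_scal, (lin_scal _ tri_proj_linear). reflexivity.
Qed.

Lemma witness_bounded n : opnorm_le (witness n) (aS * aI).
Proof.
  intros y. unfold witness. eapply Rle_trans; [apply coord_norm_le|]. eapply Rle_trans; [apply tri_proj_bounded|].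
  apply Rmult_le_compat_l; [apply Rmult_le_pos; auto|]. apply single_norm.
Qed.

Definition scaled_witness (n : nat) (y : H) : H := hscal (Creal (- / c n)) (witness n y).

Lemma scaled_witness_spec n : is_linear (scaled_witness n) /\ opnorm_le (scaled_witness n) (aS * aI / c n) /\
  forall g y, hsub (pi g y) (om n g y) = hsub (pi g (scaled_witness n y)) (scaled_witness n (om n g y)).
Proof.
  pose proof (Hc n) as cn.
  split; [|split].
  - unfold scaled_witness. apply lin_rscal, witness_linear.
  - intros y. unfold scaled_witness. rewrite hnorm_scal_real. rewrite Rabs_left by (apply Ropp_lt_gt_0_contravar, Rinv_0_lt_compat; lra).
    rewrite Ropp_involutive. pose proof (witness_bounded n y).
    apply (Rmult_le_compat_l (/ c n)) in H0; [|apply Rlt_le, Rinv_0_lt_compat; lra].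
    eapply Rle_trans; [exact H0|]. right. unfold Rdiv. ring.
  - intros g y. unfold scaled_witness. rewrite witness_cobound, (lin_scal _ (rep_lin pi Hpi g)). unfold defect.
    apply eq_by_re_inner; intro z.
    repeat (rewrite ?re_inner_addl, ?re_inner_subl, ?re_inner_scall, ?re_inner_oppl, ?re_inner_0l,
                  ?im_inner_addl, ?im_inner_subl, ?im_inner_scall, ?im_inner_oppl, ?im_inner_0l). simpl. field. lra.
Qed.

End Split.

Theorem defects_uniformly_inner {G : Group} {H : HilbertSpace} (pi : G -> H -> H) (Hpi : unitary_rep pi)
  (HG : unitarisable G) (om : nat -> G -> H -> H) (Hom : forall n, unitary_rep (om n)) (c : nat -> R)
  (Hc : forall n, 0 < c n) (HD : forall n g x, hnorm (defect pi om c n g x) <= hnorm x) :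
  exists C, 0 <= C /\ forall n, exists T, is_linear T /\ opnorm_le T (C / c n) /\
    forall g y, hsub (pi g y) (om n g y) = hsub (pi g (T y)) (T (om n g y)).
Proof.
  destruct (HG _ _ (tri_rep_unif_bounded pi Hpi om Hom c HD)) as [S [Sinv [[LS [aS BS]] [[LI [aI BI]] [SSi [SiS Hsig]]]]]].
  set (aS' := Rmax aS 0). set (aI' := Rmax aI 0).
  assert (BS' : opnorm_le S aS').
  { intros x. eapply Rle_trans; [apply BS|]. apply Rmult_le_compat_r; [apply hnorm_ge0|apply Rmax_l]. }
  assert (BI' : opnorm_le Sinv aI').
  { intros x. eapply Rle_trans; [apply BI|]. apply Rmult_le_compat_r; [apply hnorm_ge0|apply Rmax_l]. }
  exists (aS' * aI'). split; [apply Rmult_le_pos; apply Rmax_r|].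
  intros n. eexists.
  apply (scaled_witness_spec pi Hpi om Hom c Hc HD S Sinv aS' aI' LS LI (Rmax_r _ _) (Rmax_r _ _) BS' BI' SSi SiS Hsig n).
Qed.

(** * Strong rigidity *)

Section Final.
Context {G : Group} {H : HilbertSpace}.

Lemma unitary_pair_inv (U U' : H -> H) : unitary_pair U U' -> is_unitary U'.
Proof.
  intros [HU [E1 E2]]. pose proof (unitary_inj U HU) as Inj. split; [|split].
  - split; intros; apply Inj; rewrite E1.
    + rewrite (lin_add U (unitary_lin U HU)), !E1. reflexivity.
    + rewrite (lin_scal U (unitary_lin U HU)), E1. reflexivity.
  - intros x y. destruct HU as [_ [Hi _]]. rewrite <- Hi, !E1. reflexivity.
  - intros y. exists (U y). apply E2.
Qed.

Lemma unitary_comp (U V : H -> H) : is_unitary U -> is_unitary V -> is_unitary (fun x => U (V x)).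
Proof.
  intros HU HV. split; [|split].
  - apply lin_comp; apply unitary_lin; auto.
  - intros x y. destruct HU as [_ [Hu _]]. destruct HV as [_ [Hv _]]. rewrite Hu, Hv. reflexivity.
  - intros y. destruct HU as [_ [_ Su]]. destruct HV as [_ [_ Sv]].
    destruct (Su y) as [z Hz]. destruct (Sv z) as [x Hx]. exists x. rewrite Hx. exact Hz.
Qed.

Lemma unitary_inverse_exists (W : H -> H) : is_unitary W -> exists W', unitary_pair W' W.
Proof.
  intros UW. pose proof (unitary_inj W UW) as Inj. destruct UW as [LW [IW SW]].
  set (Wi := fun y => proj1_sig (constructive_indefinite_description _ (SW y))).
  assert (E1 : forall y, W (Wi y) = y) by (intros y; exact (proj2_sig (constructive_indefinite_description _ (SW y)))).
  assert (E2 : forall x, Wi (W x) = x) by (intros x; apply Inj; apply E1).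
  exists Wi. split; [|split; auto]. apply (unitary_pair_inv W Wi). split; auto. split; auto.
Qed.

Lemma scaled_diff_norm_le (pi om : G -> H -> H) (c : R) : 1 <= c ->
  repdist_le pi om (/ (c * c)) -> forall g x, hnorm (hscal (Creal c) (hsub (pi g x) (om g x))) <= hnorm x.
Proof.
  intros Hc Hd g x. rewrite hnorm_scal_real, Rabs_pos_eq by lra.
  specialize (Hd g x). pose proof (hnorm_ge0 x).
  apply (Rmult_le_compat_l c) in Hd; [|lra].
  eapply Rle_trans; [exact Hd|].
  replace (c * (/ (c * c) * hnorm x)) with (/ c * hnorm x) by (field; lra).
  rewrite <- (Rmult_1_l (hnorm x)) at 2. apply Rmult_le_compat_r; auto.
  rewrite <- Rinv_1. apply Rinv_le_contravar; lra.
Qed.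

Lemma conj_unitary_rep (pi : G -> H -> H) (U U' V V' : H -> H) :
  unitary_rep pi -> unitary_pair U U' -> unitary_pair V V' ->
  unitary_rep (fun g x => U' (V (pi g (V' (U x))))).
Proof.
  intros [[Hm H1] Hu] HUU HVV.
  pose proof (unitary_pair_inv U U' HUU) as UU'. pose proof (unitary_pair_inv V V' HVV) as UV'.
  destruct HUU as [UU [EU1 EU2]]. destruct HVV as [UV [EV1 EV2]].
  split; [split|].
  - intros g h x. rewrite EU1, EV2, Hm. reflexivity.
  - intros x. rewrite H1, EV1, EU2. reflexivity.
  - intros g. apply unitary_comp; auto. apply unitary_comp; auto.
    apply unitary_comp; [apply Hu|]. apply unitary_comp; auto.
Qed.

Variables (pi : G -> H -> H) (Hpi : unitary_rep pi).

(* Otherwise a sequence of bad [om n] at distance [1/(n+1)^2] from [pi] would contradict the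
   uniform bound of [defects_uniformly_inner] with scale factors [c n = n + 1]. *)
Lemma near_rep_intertwined_near_id (HG : unitarisable G) (eps : R) : eps > 0 -> exists delta, delta > 0 /\
  forall om, unitary_rep om -> repdist_le pi om delta ->
    exists T, is_linear T /\ opnorm_le T eps /\ forall g y, hsub (pi g y) (om g y) = hsub (pi g (T y)) (T (om g y)).
Proof.
  intros He. apply NNPP. intros Hn.
  assert (Hn' : forall n : nat, exists om : G -> H -> H, unitary_rep om /\
      repdist_le pi om (/ ((INR n + 1) * (INR n + 1))) /\
      ~ (exists T, is_linear T /\ opnorm_le T eps /\ forall g y, hsub (pi g y) (om g y) = hsub (pi g (T y)) (T (om g y)))).
  { intros n. apply NNPP. intros Hc. apply Hn. exists (/ ((INR n + 1) * (INR n + 1))). split.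
    { apply Rinv_0_lt_compat. pose proof (pos_INR n). nra. }
    intros om Hom Hd. apply NNPP. intros Hno. apply Hc. exists om. auto. }
  destruct (choice_nat _ Hn') as [oms Homs].
  set (c := fun n : nat => INR n + 1).
  assert (Hc : forall n, 0 < c n) by (intros n; unfold c; pose proof (pos_INR n); lra).
  assert (Hom : forall n, unitary_rep (oms n)) by (intros n; apply Homs).
  assert (HD : forall n g x, hnorm (defect pi oms c n g x) <= hnorm x).
  { intros n. apply scaled_diff_norm_le; [unfold c; pose proof (pos_INR n); lra|apply Homs]. }
  destruct (defects_uniformly_inner pi Hpi HG oms Hom c Hc HD) as [C [C0 HC]].
  destruct (inv_succ_eventually_lt (eps / (C + 1))) as [N HN]; [apply Rdiv_lt_0_compat; lra|].
  specialize (HN N (le_n _)).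
  destruct (HC N) as [T [LT [BT RT]]].
  destruct (Homs N) as [_ [_ Hno]]. apply Hno. exists T. split; [auto|split; [|auto]].
  eapply opnorm_le_mono; [|exact BT]. unfold c, Rdiv.
  pose proof (pos_INR N).
  assert (/ (INR N + 1) * (C + 1) < eps).
  { apply (Rmult_lt_compat_r (C + 1)) in HN; [|lra]. unfold Rdiv in HN.
    rewrite Rmult_assoc, Rinv_l, Rmult_1_r in HN by lra. exact HN. }
  assert (0 < / (INR N + 1)) by (apply Rinv_0_lt_compat; lra). nra.
Qed.

Lemma near_rep_unitarily_intertwined (HG : unitarisable G) (eps : R) : eps > 0 -> exists delta, delta > 0 /\
  forall om, unitary_rep om -> repdist_le pi om delta ->
    exists W W', unitary_pair W W' /\ (forall g x, om g (W x) = W (pi g x)) /\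
      opdist_le W (fun x => x) eps.
Proof.
  intros He. set (t := Rmin (1/64) (eps / 8)).
  assert (t0 : 0 < t) by (unfold t; apply Rmin_glb_lt; lra).
  assert (t1 : t <= 1/64) by apply Rmin_l. assert (t2 : t <= eps / 8) by apply Rmin_r.
  destruct (near_rep_intertwined_near_id HG t t0) as [delta [Hd HL]]. exists delta. split; auto.
  intros om Hom Hrd. destruct (HL om Hom Hrd) as [T [LT [BT RT]]].
  destruct (unitary_intertwiner_near_id pi om Hpi Hom t T ltac:(lra) t1 LT BT RT) as [W0 [UW0 [IW0 CW0]]].
  destruct (unitary_inverse_exists W0 UW0) as [Wi [UWi [E2 E1]]].
  pose proof (unitary_inj W0 UW0) as Inj.
  exists Wi, W0. split; [split; auto|split].
  - intros g x. apply Inj. rewrite <- IW0, !E1. reflexivity.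
  - intros x. rewrite <- (unitary_norm W0 UW0), (lin_sub W0 (unitary_lin W0 UW0)), E1, hnorm_sub_sym.
    eapply Rle_trans; [apply CW0|]. apply Rmult_le_compat_r; [apply hnorm_ge0|lra].
Qed.

Lemma unitarisable_rigid (HG : unitarisable G) : rigid pi.
Proof.
  destruct (near_rep_unitarily_intertwined HG 1 ltac:(lra)) as [delta [Hd HL]]. exists delta. split; auto.
  intros om Hom Hrd. destruct (HL om Hom Hrd) as [W [W' [[UW _] [IW _]]]].
  exists W. split; auto.
Qed.

(* [V pi V^-1 - U pi U^-1 = (V - U) pi V^-1 + U pi (V^-1 - U^-1)], and [V^-1 - U^-1 = U^-1 (U - V) V^-1]. *)
Lemma orbit_map_continuous (U U' : H -> H) : unitary_pair U U' ->
  forall eps, eps > 0 -> exists delta, delta > 0 /\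
    forall V V', unitary_pair V V' -> opdist_le V U delta ->
      repdist_le (conj_rep V V' pi) (conj_rep U U' pi) eps.
Proof.
  intros HUU eps He. exists (eps / 2). split; [lra|].
  intros V V' HVV Hd g x. unfold conj_rep.
  destruct HUU as [UU [EU1 EU2]]. destruct HVV as [UV [EV1 EV2]].
  assert (N1 : hnorm (V' x) = hnorm x) by (rewrite <- (unitary_norm V UV), EV1; reflexivity).
  assert (D1 : hnorm (hsub (V (pi g (V' x))) (U (pi g (V' x)))) <= eps / 2 * hnorm x).
  { eapply Rle_trans; [apply Hd|]. rewrite (rep_norm pi Hpi), N1. lra. }
  assert (D2 : hnorm (hsub (U (pi g (V' x))) (U (pi g (U' x)))) <= eps / 2 * hnorm x).
  { rewrite <- (lin_sub U (unitary_lin U UU)), (unitary_norm U UU), <- (lin_sub _ (rep_lin pi Hpi g)),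
      (rep_norm pi Hpi), <- (unitary_norm U UU), (lin_sub U (unitary_lin U UU)), EU1.
    rewrite <- (EV1 x) at 2. rewrite hnorm_sub_sym. eapply Rle_trans; [apply Hd|]. rewrite N1. lra. }
  eapply Rle_trans; [apply (hnorm_sub_triangle _ (U (pi g (V' x))))|]. lra.
Qed.

(* [U^-1 V pi V^-1 U] is a unitary representation close to [pi]; a unitary [W0] near the
   identity intertwining the two gives [W = U W0] near [U] with [W pi W^-1 = V pi V^-1]. *)
Lemma orbit_map_open (HG : unitarisable G) (U U' : H -> H) : unitary_pair U U' ->
  forall eps, eps > 0 -> exists delta, delta > 0 /\
    forall V V', unitary_pair V V' ->
      repdist_le (conj_rep V V' pi) (conj_rep U U' pi) delta ->
      exists W W', unitary_pair W W' /\ opdist_le W U eps /\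
        forall g x, conj_rep W W' pi g x = conj_rep V V' pi g x.
Proof.
  intros HUU eps He. destruct (near_rep_unitarily_intertwined HG eps He) as [delta [Hd HL]].
  exists delta. split; auto.
  intros V V' HVV Hrd.
  set (om := fun g x => U' (V (pi g (V' (U x))))).
  assert (Hom : unitary_rep om) by exact (conj_unitary_rep pi U U' V V' Hpi HUU HVV).
  destruct HUU as [UU [EU1 EU2]].
  assert (Hrd' : repdist_le pi om delta).
  { intros g x. unfold om. rewrite <- (unitary_norm U UU), (lin_sub U (unitary_lin U UU)), EU1.
    pose proof (Hrd g (U x)) as Hx. unfold conj_rep in Hx. rewrite EU2 in Hx.
    rewrite hnorm_sub_sym, (unitary_norm U UU) in Hx. exact Hx. }
  destruct (HL om Hom Hrd') as [W0 [W0' [[UW0 [EW1 EW2]] [IW0 CW0]]]].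
  exists (fun x => U (W0 x)), (fun x => W0' (U' x)). split; [|split].
  - split; [apply unitary_comp; auto|split; intros x].
    + rewrite EW1, EU1. reflexivity.
    + rewrite EU2, EW2. reflexivity.
  - intros x. rewrite <- (lin_sub U (unitary_lin U UU)), (unitary_norm U UU). apply CW0.
  - intros g x. unfold conj_rep. rewrite <- IW0, EW1. unfold om. rewrite EU1, EU1. reflexivity.
Qed.

End Final.

Theorem theorem3p3 (G : Group) (HG : unitarisable G)
  (H : HilbertSpace) (pi : G -> H -> H) (Hpi : unitary_rep pi) :
  strongly_rigid pi.
Proof.
  split; [exact (unitarisable_rigid pi Hpi HG)|split].
  - exact (orbit_map_continuous pi Hpi).
  - exact (orbit_map_open pi Hpi HG).
Qed.
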